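(* Let $k\in\{1,\dots,N-1\}$. Let $(q^n)$, with $q^n=(\zeta^n_i,z^n_i)_{i\in\mathbf N}$, be a sequence of simple choreographic loops in $\Lambda$ satisfying $[z^n_0]=0$. Suppose $\|q^n\|_{H^1}\to\infty$ while $\mathcal A_k(q^n;2\pi)$ stays bounded. Then: (a) $\|z^n_i\|_{H^1}$ is bounded uniformly in $i$ and $n$; (b) for each $i\in\mathbf N$, $|\zeta^n_i(t)|\to\infty$ uniformly in $t\in\mathbb R$; (c) after passing to a subsequence, for each $i\in\mathbf N$ there is $u_i\in\mathbb C$ with $|u_i|=1$ such that $\zeta_i^n(t)/|\zeta_i^n(t)|\to e^{-\mathrm ikt}u_i$ uniformly on $\mathbb R$.
   Context: Fix $N\ge2$ and $\mathbf N=\{0,\dots,N-1\}$. Positions are $q_i=(\zeta_i,z_i)\in\mathbb C\times\mathbb R$ with $\zeta_i=x_i+\mathrm iy_i$. - Loop space: $\Lambda=H^1(\mathbb R/2\pi\mathbb Z,\mathbb R^{3N})$. - Simple choreographic loops: a loop $q\in\Lambda$ is simple choreographic if $q_i(t)=q_0(t+2\pi i/N)$ for all $i,t$. - Potential: $U(q)=\sum_{i<j}1/|q_i-q_j|$. - Rotating-frame action: $\mathcal A_\omega(q;T)=\int_0^T\big(\tfrac12\sum_i(|\dot\zeta_i+\mathrm i\omega\zeta_i|^2+\dot z_i^2)+U(q)\big)dt$. - Mean: $[z_0]=\frac1{2\pi}\int_0^{2\pi}z_0$. *)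

From Stdlib Require Import Reals Lra Lia ZArith ClassicalEpsilon.
Open Scope R_scope.

Fixpoint rsum (n : nat) (f : nat -> R) : R :=
  match n with O => 0 | S p => rsum p f + f p end.

(* Riemann integral over [0, 2*pi] (value chosen when the integrand is
   Riemann integrable; all integrands used below are continuous). *)
Definition Rint (f : R -> R) : R :=
  epsilon (inhabits 0)
    (fun v => exists pr : Riemann_integrable f 0 (2 * PI), RiemannInt pr = v).

(* Fourier coefficient c_m (m in Z) of the complex function x + i y,
   c_m = (1/2pi) int_0^{2pi} (x + i y) e^{-imt} dt, written via its real
   and imaginary parts. *)
Definition fc (f : R -> R) (m : Z) : R := / (2 * PI) * Rint (fun t => f t * cos (IZR m * t)).
Definition fs (f : R -> R) (m : Z) : R := / (2 * PI) * Rint (fun t => f t * sin (IZR m * t)).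
Definition cabs2 (x y : R -> R) (m : Z) : R :=
  (fc x m + fs y m) ^ 2 + (fc y m - fs x m) ^ 2.   (* |c_m|^2 *)

Definition zpart (g : Z -> R) (M : nat) : R :=
  sum_f_R0 (fun j => g (Z.of_nat j - Z.of_nat M)%Z) (2 * M).
Definition zsummable (g : Z -> R) : Prop := exists l, Un_cv (zpart g) l.
Definition zsum (g : Z -> R) : R := epsilon (inhabits 0) (fun l => Un_cv (zpart g) l).

(* H^1 norm of a 2pi-periodic complex function x + i y (Parseval):
   ||f||_{H^1}^2 = int |f|^2 + int |f'|^2 = 2 pi sum_m (1+m^2)|c_m|^2. *)
Definition H1_weight (x y : R -> R) (m : Z) : R := (1 + IZR m ^ 2) * cabs2 x y m.
Definition H1sq (x y : R -> R) : R := 2 * PI * zsum (H1_weight x y).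
Definition zero_fun : R -> R := fun _ => 0.
Definition H1norm_real (f : R -> R) : R := sqrt (H1sq f zero_fun).

(* an H^1 2pi-periodic real function (continuous representative) *)
Definition in_H1 (f : R -> R) : Prop :=
  continuity f /\ (forall t, f (t + 2 * PI) = f t) /\ zsummable (H1_weight f zero_fun).

(* A loop: positions q_i(t) = (zeta_i(t), z_i(t)), zeta_i = x_i + i y_i. *)
Record loop := mkLoop { lx : nat -> R -> R; ly : nat -> R -> R; lz : nat -> R -> R }.

Definition in_Lambda (N : nat) (q : loop) : Prop :=
  forall i, (i < N)%nat -> in_H1 (lx q i) /\ in_H1 (ly q i) /\ in_H1 (lz q i).

Definition H1norm_loop (N : nat) (q : loop) : R :=
  sqrt (rsum N (fun i => H1sq (lx q i) (ly q i) + H1sq (lz q i) zero_fun)).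

Definition simple_choreographic (N : nat) (q : loop) : Prop :=
  forall i t, (i < N)%nat ->
    lx q i t = lx q 0 (t + 2 * PI * INR i / INR N) /\
    ly q i t = ly q 0 (t + 2 * PI * INR i / INR N) /\
    lz q i t = lz q 0 (t + 2 * PI * INR i / INR N).

Definition mean (f : R -> R) : R := / (2 * PI) * Rint f.

Definition dist3 (q : loop) (i j : nat) (t : R) : R :=
  sqrt ((lx q i t - lx q j t) ^ 2 + (ly q i t - ly q j t) ^ 2 + (lz q i t - lz q j t) ^ 2).

(* truncated potential U_M(q) = sum_{i<j} 1 / max(|q_i - q_j|, 1/(M+1));
   U_M increases to U as M -> oo, so int U = sup_M int U_M (monotone conv.). *)
Definition U_trunc (N : nat) (q : loop) (M : nat) (t : R) : R :=
  rsum N (fun i => rsum N (fun j =>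
    if Nat.ltb i j then / Rmax (dist3 q i j t) (/ INR (S M)) else 0)).

(* int_0^{2pi} |dzeta + i w zeta|^2 = 2pi sum_m (m + w)^2 |c_m|^2 *)
Definition kin (w : R) (x y : R -> R) : R :=
  2 * PI * zsum (fun m => (IZR m + w) ^ 2 * cabs2 x y m).

(* A_w(q; 2pi) with U replaced by U_M; A_w(q;2pi) = sup_M action_trunc w N q M *)
Definition action_trunc (w : R) (N : nat) (q : loop) (M : nat) : R :=
  / 2 * rsum N (fun i => kin w (lx q i) (ly q i) + kin 0 (lz q i) zero_fun)
  + Rint (U_trunc N q M).

Definition cnorm (x y : R) : R := sqrt (x ^ 2 + y ^ 2).

(** Write [zeta = x + i y] and [c_m] for its Fourier coefficients. The kinetic part of the
    rotating-frame action with [omega = k] is [2 pi sum_m (m + k)^2 |c_m|^2], so a bound on the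
    action controls every mode except the resonant one [m = -k]. By Cauchy-Schwarz (here AM-GM
    against the weights [1 + m^2]) the non-resonant part of [zeta] has summable coefficients, and
    a Fejér-mean argument turns this into a uniform bound: [zeta(t)] stays within a fixed distance
    [B0] of the rotating mode [c_(-k) e^(-ikt)]. The vertical components have mean zero and are
    therefore bounded in [H^1] by the action alone, so [H^1] blow-up forces [|c_(-k)| -> oo];
    this gives (b), and (c) follows by extracting a convergent subsequence of the unit vectors
    [c_(-k) / |c_(-k)|]. The choreography symmetry [zeta_i(t) = zeta_0(t + 2 pi i / N)]
    transfers everything from body 0 to body i. *)

From Stdlib Require Import Reals Lra Lia ZArith ClassicalEpsilon FunctionalExtensionality.
From Coquelicot Require Import Coquelicot.
Open Scope R_scope.

(** * Sums over the integers *)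

Lemma zpart_S g M : zpart g (S M) =
  zpart g M + g (- (Z.of_nat M + 1))%Z + g (Z.of_nat M + 1)%Z.
Proof.
  unfold zpart.
  replace (2 * S M)%nat with (S (S (2 * M))) by lia.
  rewrite decomp_sum by lia. change (Init.Nat.pred (S (S (2 * M)))) with (S (2 * M)).
  rewrite tech5.
  replace (Z.of_nat 0 - Z.of_nat (S M))%Z with (- (Z.of_nat M + 1))%Z by lia.
  replace (Z.of_nat (S (S (2 * M))) - Z.of_nat (S M))%Z with (Z.of_nat M + 1)%Z by lia.
  rewrite (sum_eq _ (fun j => g (Z.of_nat j - Z.of_nat M)%Z)); [lra |].
  intros i _. f_equal. lia.
Qed.

Lemma zpart_plus g h M : zpart (fun m => g m + h m) M = zpart g M + zpart h M.
Proof. apply sum_plus. Qed.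

Lemma zpart_scal c g M : zpart (fun m => c * g m) M = c * zpart g M.
Proof. unfold zpart. rewrite scal_sum. apply sum_eq. intros; ring. Qed.

Lemma zpart_le g h M : (forall m, g m <= h m) -> zpart g M <= zpart h M.
Proof. intro H. apply sum_Rle. intros; apply H. Qed.

Lemma zpart_opp g M : zpart (fun m => g (- m)%Z) M = zpart g M.
Proof.
  induction M as [|M IH]; [reflexivity |].
  rewrite !zpart_S, IH, Z.opp_involutive. lra.
Qed.

Lemma zpart_indicator (m0 : Z) a M :
  zpart (fun m => if Z.eq_dec m m0 then a else 0) M =
  if Z_le_dec (Z.abs m0) (Z.of_nat M) then a else 0.
Proof.
  induction M as [|M IH].
  - change (zpart ?h 0) with (h 0%Z); cbv beta.
    destruct (Z.eq_dec 0 m0), (Z_le_dec (Z.abs m0) (Z.of_nat 0)); auto; lia.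
  - rewrite zpart_S, IH.
    destruct (Z_le_dec (Z.abs m0) (Z.of_nat M)), (Z_le_dec (Z.abs m0) (Z.of_nat (S M))),
      (Z.eq_dec (- (Z.of_nat M + 1)) m0), (Z.eq_dec (Z.of_nat M + 1) m0); try lra; lia.
Qed.

Lemma zpart_inv_1_plus_sq M : zpart (fun m => / (1 + IZR m ^ 2)) M <= 5.
Proof.
  (* telescoping against 2 / ((x+1)(x+2)) = 2/(x+1) - 2/(x+2) *)
  enough (H : zpart (fun m => / (1 + IZR m ^ 2)) M <= 5 - 4 / (INR M + 1)).
  { pose proof (pos_INR M). enough (0 < 4 / (INR M + 1)) by lra.
    apply Rdiv_lt_0_compat; lra. }
  induction M as [|M IH].
  - change (zpart ?h 0) with (h 0%Z); cbv beta. simpl. lra.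
  - rewrite zpart_S, opp_IZR, plus_IZR, <- INR_IZR_INZ, S_INR.
    set (x := INR M) in *. assert (0 <= x) by apply pos_INR.
    replace ((- (x + 1)) ^ 2) with ((x + 1) ^ 2) by ring.
    assert (/ (1 + (x + 1) ^ 2) <= 2 / ((x + 1) * (x + 2))).
    { apply Rmult_le_reg_r with ((1 + (x + 1) ^ 2) * ((x + 1) * (x + 2))); [nra |].
      field_simplify; nra. }
    assert (4 / (x + 1) - 4 / (x + 1 + 1) = 4 / ((x + 1) * (x + 2))) by (field; lra).
    assert (2 / ((x + 1) * (x + 2)) + 2 / ((x + 1) * (x + 2)) = 4 / ((x + 1) * (x + 2)))
      by (field; lra).
    lra.
Qed.

Lemma zsum_cv g : zsummable g -> Un_cv (zpart g) (zsum g).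
Proof. intros Hs. apply (epsilon_spec (inhabits 0) (fun l => Un_cv (zpart g) l) Hs). Qed.

Section NonnegSums.
Variable g : Z -> R.
Hypothesis g_ge0 : forall m, 0 <= g m.

Lemma zpart_growing : Un_growing (zpart g).
Proof.
  intro M. rewrite zpart_S.
  pose proof (g_ge0 (- (Z.of_nat M + 1))%Z). pose proof (g_ge0 (Z.of_nat M + 1)%Z). lra.
Qed.

Lemma zpart_le_zsum M : zsummable g -> zpart g M <= zsum g.
Proof. intro Hs. apply growing_ineq; [apply zpart_growing | apply zsum_cv, Hs]. Qed.

Lemma zsum_ge0 : zsummable g -> 0 <= zsum g.
Proof.
  intro Hs. pose proof (zpart_le_zsum 0 Hs) as H. pose proof (g_ge0 0).
  change (zpart g 0) with (g 0%Z) in H. lra.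
Qed.

Lemma zsum_le B : (forall M, zpart g M <= B) -> zsummable g /\ zsum g <= B.
Proof.
  intro HB.
  destruct (growing_cv (zpart g) zpart_growing) as [l Hl].
  { exists B. intros x [M ->]. apply HB. }
  assert (Hs : zsummable g) by (exists l; exact Hl).
  split; [exact Hs |].
  apply (Rle_cv_lim (Un := zpart g) (Vn := fun _ => B)); [exact HB | apply zsum_cv, Hs |].
  intros eps Heps. exists 0%nat. intros. unfold Rdist. rewrite Rminus_diag, Rabs_R0. lra.
Qed.

End NonnegSums.

Lemma zsum_le_scal g u c : (forall m, 0 <= g m) -> 0 <= c -> (forall m, 0 <= u m) -> zsummable u ->
  (forall m, g m <= c * u m) -> zsummable g /\ zsum g <= c * zsum u.
Proof.
  intros Hg Hc Hu Su Hgu. apply zsum_le; [exact Hg |]. intro M.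
  eapply Rle_trans; [apply zpart_le, Hgu |].
  rewrite zpart_scal. apply Rmult_le_compat_l; [exact Hc | apply zpart_le_zsum; assumption].
Qed.

Section Windows.
Variable r : Z -> R.
Hypothesis r_ge0 : forall m, 0 <= r m.

Definition window a L := sum_f_R0 (fun l => r (a + Z.of_nat l)%Z) L.

Lemma window_le_S a L : window a L <= window a (S L).
Proof. unfold window. rewrite tech5. specialize (r_ge0 (a + Z.of_nat (S L))%Z). lra. Qed.

Lemma window_le_extend_left a L d : window a L <= window (a - Z.of_nat d)%Z (L + d).
Proof.
  induction d as [|d IH].
  - replace (a - Z.of_nat 0)%Z with a by lia. rewrite Nat.add_0_r. lra.
  - eapply Rle_trans; [apply IH |].
    replace (L + S d)%nat with (S (L + d)) by lia.
    unfold window. rewrite (decomp_sum _ (S (L + d))) by lia. simpl Init.Nat.pred.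
    rewrite (sum_eq (fun i => r (a - Z.of_nat (S d) + Z.of_nat (S i))%Z)
                    (fun l => r (a - Z.of_nat d + Z.of_nat l)%Z)) by (intros; f_equal; lia).
    specialize (r_ge0 (a - Z.of_nat (S d) + Z.of_nat 0)%Z). lra.
Qed.

Lemma window_le_extend_right a L L' : (L <= L')%nat -> window a L <= window a L'.
Proof. induction 1; [lra | eapply Rle_trans; [eassumption | apply window_le_S]]. Qed.

Lemma shifted_sum_le_zpart (j M : nat) : (j <= M)%nat ->
  sum_f_R0 (fun l => r (Z.of_nat l - Z.of_nat j)%Z) M <= zpart r M.
Proof.
  intro Hj.
  replace (zpart r M) with (window (- Z.of_nat M)%Z (2 * M))
    by (apply sum_eq; intros; f_equal; lia).
  replace (sum_f_R0 (fun l => r (Z.of_nat l - Z.of_nat j)%Z) M) with (window (- Z.of_nat j)%Z M)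
    by (apply sum_eq; intros; f_equal; lia).
  eapply Rle_trans; [apply (window_le_extend_left _ _ (M - j)) |].
  replace (- Z.of_nat j - Z.of_nat (M - j))%Z with (- Z.of_nat M)%Z by lia.
  apply window_le_extend_right. lia.
Qed.

End Windows.

(** * Integrals of continuous functions *)

Definition cont (f : R -> R) := forall x, continuous f x.

Definition periodic (f : R -> R) := forall x, f (x + 2 * PI) = f x.

Lemma continuous_pow_comp (f : R -> R) n x :
  continuous f x -> continuous (fun t => f t ^ n) x.
Proof.
  intro H. induction n; simpl; [apply continuous_const | apply (continuous_mult f); auto].
Qed.

Ltac cont_tac := repeat match goal with
 | H : cont ?f |- continuous ?f _ => apply H
 | |- continuous (fun _ => ?c) _ => apply continuous_const
 | |- continuous (fun t => t) _ => apply continuous_id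
 | |- continuous (fun t => @?a t + @?b t) _ => apply (continuous_plus a b)
 | |- continuous (fun t => @?a t - @?b t) _ => apply (continuous_minus a b)
 | |- continuous (fun t => @?a t * @?b t) _ => apply (continuous_mult a b)
 | |- continuous (fun t => - @?a t) _ => apply (continuous_opp a)
 | |- continuous (fun t => @?a t / ?c) _ => apply (continuous_mult a (fun _ => / c))
 | |- continuous (fun t => cos (@?a t)) _ => apply (continuous_cos_comp a)
 | |- continuous (fun t => sin (@?a t)) _ => apply (continuous_sin_comp a)
 | |- continuous (fun t => Rabs (@?a t)) _ => apply (continuous_Rabs_comp a)
 | |- continuous (fun t => sqrt (@?a t)) _ => apply (continuous_sqrt_comp a)
 | |- continuous (fun t => (@?a t) ^ ?n) _ => apply (continuous_pow_comp a n)
 | H : cont ?f |- continuous (fun t => ?f (@?g t)) _ => apply (continuous_comp g f); [| apply H]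
 end.

Ltac cont_auto := repeat match goal with |- forall _, _ => intro | |- cont _ => intro end; cont_tac.

Lemma cont_of_continuity f : continuity f -> cont f.
Proof. intros H x. apply continuity_pt_filterlim, H. Qed.

Lemma cont_ext f g : (forall x, f x = g x) -> cont f -> cont g.
Proof. intros E H. replace g with f; [exact H | apply functional_extensionality, E]. Qed.

Lemma ex_RInt_cont f a b : cont f -> ex_RInt f a b.
Proof. intro H. apply (@ex_RInt_continuous R_CompleteNormedModule). intros; apply H. Qed.

Lemma Rint_eq_RInt f : cont f -> Rint f = RInt f 0 (2 * PI).
Proof.
  intro H. unfold Rint.
  assert (pr : Riemann_integrable f 0 (2 * PI)).
  { apply continuity_implies_RiemannInt; [pose proof PI_RGT_0; lra |].
    intros; apply continuity_pt_filterlim, H. }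
  destruct (epsilon_spec (inhabits 0)
     (fun v => exists pr : Riemann_integrable f 0 (2 * PI), RiemannInt pr = v)
     (ex_intro _ (RiemannInt pr) (ex_intro _ pr eq_refl))) as [pr' <-].
  symmetry. apply RInt_Reals.
Qed.

Lemma RInt_ext_R (f g : R -> R) a b :
  (forall x, Rmin a b < x < Rmax a b -> f x = g x) -> RInt f a b = RInt g a b :> R.
Proof. apply RInt_ext. Qed.

Lemma RInt_const_R (c a b : R) : RInt (fun _ => c) a b = (b - a) * c :> R.
Proof. rewrite RInt_const. reflexivity. Qed.

Lemma RInt_plus_cont f g a b : cont f -> cont g ->
  RInt (fun x => f x + g x) a b = RInt f a b + RInt g a b :> R.
Proof. intros. apply (RInt_plus f g); apply ex_RInt_cont; assumption. Qed.

Lemma RInt_minus_cont f g a b : cont f -> cont g ->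
  RInt (fun x => f x - g x) a b = RInt f a b - RInt g a b :> R.
Proof. intros. apply (RInt_minus f g); apply ex_RInt_cont; assumption. Qed.

Lemma RInt_scal_cont f c a b : cont f -> RInt (fun x => c * f x) a b = c * RInt f a b :> R.
Proof. intro. apply (RInt_scal f a b c), ex_RInt_cont; assumption. Qed.

Lemma RInt_opp_cont f a b : cont f -> RInt (fun x => - f x) a b = - RInt f a b :> R.
Proof. intro. apply (RInt_opp f), ex_RInt_cont; assumption. Qed.

Lemma RInt_Chasles_cont f a b c : cont f -> RInt f a b + RInt f b c = RInt f a c.
Proof. intro. apply (RInt_Chasles f); apply ex_RInt_cont; assumption. Qed.

Lemma RInt_swap_cont f a b : cont f -> RInt f b a = - RInt f a b :> R.
Proof. intro. rewrite <- (opp_RInt_swap f a b); [reflexivity | apply ex_RInt_cont; assumption]. Qed.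

Lemma RInt_le_cont f g a b : cont f -> cont g -> a <= b ->
  (forall x, a < x < b -> f x <= g x) -> RInt f a b <= RInt g a b.
Proof. intros. apply RInt_le; auto; apply ex_RInt_cont; assumption. Qed.

Lemma RInt_abs_le_cont f a b : cont f -> a <= b ->
  Rabs (RInt f a b) <= RInt (fun t => Rabs (f t)) a b.
Proof. intros. apply abs_RInt_le; auto. apply ex_RInt_cont; assumption. Qed.

Lemma RInt_ge0_cont f a b : cont f -> a <= b ->
  (forall x, a < x < b -> 0 <= f x) -> 0 <= RInt f a b.
Proof.
  intros Hf Hab H. replace 0 with (RInt (fun _ => 0) a b :> R).
  - apply RInt_le_cont; auto. cont_auto.
  - rewrite RInt_const_R. apply Rmult_0_r.
Qed.

Lemma RInt_comp_lin_cont f u v a b : cont f ->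
  RInt (fun y => u * f (u * y + v)) a b = RInt f (u * a + v) (u * b + v) :> R.
Proof. intro. rewrite <- (RInt_comp_lin f u v a b); [reflexivity | apply ex_RInt_cont; assumption]. Qed.

Lemma RInt_translate f c a b : cont f ->
  RInt (fun s => f (s + c)) a b = RInt f (a + c) (b + c) :> R.
Proof.
  intro Hf. pose proof (RInt_comp_lin_cont f 1 c a b Hf) as E.
  rewrite !Rmult_1_l in E. rewrite <- E.
  apply RInt_ext_R; intros; rewrite !Rmult_1_l; reflexivity.
Qed.

Lemma RInt_reflect f t a b : cont f ->
  RInt (fun s => f (t - s)) a b = RInt f (t - b) (t - a) :> R.
Proof.
  intro Hf. pose proof (RInt_comp_lin_cont f (-1) t a b Hf) as E.
  rewrite (RInt_swap_cont f (t - a) (t - b) Hf).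
  replace (t - b) with (-1 * b + t) by ring. replace (t - a) with (-1 * a + t) by ring.
  rewrite <- E, <- RInt_opp_cont by cont_auto.
  apply RInt_ext_R; intros. replace (-1 * x + t) with (t - x) by ring. ring.
Qed.

Lemma RInt_periodic_translate f c : cont f -> periodic f ->
  RInt (fun s => f (s + c)) 0 (2 * PI) = RInt f 0 (2 * PI) :> R.
Proof.
  intros Hf Pf. rewrite RInt_translate, Rplus_0_l by exact Hf.
  assert (E : RInt f (2 * PI) (2 * PI + c) = RInt f 0 c).
  { replace (2 * PI) with (0 + 2 * PI) at 1 by ring.
    replace (2 * PI + c) with (c + 2 * PI) by ring.
    rewrite <- RInt_translate by exact Hf. apply RInt_ext_R; intros; apply Pf. }
  rewrite <- (RInt_Chasles_cont f c 0 (2 * PI + c)) by exact Hf.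
  rewrite <- (RInt_Chasles_cont f 0 (2 * PI) (2 * PI + c)) by exact Hf.
  rewrite E, (RInt_swap_cont f c 0) by exact Hf. ring.
Qed.

Lemma RInt_periodic_reflect f t : cont f -> periodic f ->
  RInt (fun s => f (t - s)) 0 (2 * PI) = RInt f 0 (2 * PI) :> R.
Proof.
  intros Hf Pf.
  rewrite RInt_reflect, <- (RInt_periodic_translate f (t - 2 * PI)), RInt_translate by assumption.
  f_equal; ring.
Qed.

(** * Fourier coefficients *)

Lemma sin_IZR_2PI n : sin (IZR n * (2 * PI)) = 0.
Proof. apply sin_eq_0_1. exists (2 * n)%Z. rewrite mult_IZR. ring. Qed.

Lemma cos_IZR_2PI n : cos (IZR n * (2 * PI)) = 1.
Proof.
  replace (IZR n * (2 * PI)) with (2 * (IZR n * PI)) by ring.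
  rewrite cos_2a_sin, sin_eq_0_1; [ring | exists n; ring].
Qed.

Lemma cos_IZR_periodic n x : cos (IZR n * (x + 2 * PI)) = cos (IZR n * x).
Proof.
  replace (IZR n * (x + 2 * PI)) with (IZR n * x + IZR n * (2 * PI)) by ring.
  rewrite cos_plus, sin_IZR_2PI, cos_IZR_2PI. ring.
Qed.

Lemma sin_IZR_periodic n x : sin (IZR n * (x + 2 * PI)) = sin (IZR n * x).
Proof.
  replace (IZR n * (x + 2 * PI)) with (IZR n * x + IZR n * (2 * PI)) by ring.
  rewrite sin_plus, sin_IZR_2PI, cos_IZR_2PI. ring.
Qed.

Definition delta0 (m : Z) : R := if Z.eq_dec m 0 then 1 else 0.

Lemma RInt_cos_IZR n : RInt (fun t => cos (IZR n * t)) 0 (2 * PI) = 2 * PI * delta0 n :> R.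
Proof.
  unfold delta0. destruct (Z.eq_dec n 0) as [->|Hn].
  - rewrite (RInt_ext_R _ (fun _ => 1)), RInt_const_R; [ring |].
    intros; simpl. rewrite Rmult_0_l, cos_0. reflexivity.
  - assert (Hn' : IZR n <> 0) by (apply not_0_IZR; exact Hn).
    assert (H : is_RInt (fun t => cos (IZR n * t)) 0 (2 * PI)
      (minus ((fun t => sin (IZR n * t) / IZR n) (2 * PI))
             ((fun t => sin (IZR n * t) / IZR n) 0))).
    { apply (is_RInt_derive (fun t => sin (IZR n * t) / IZR n)).
      - intros x _. auto_derive; [exact I | field; exact Hn'].
      - intros x _. cont_tac. }
    apply (@is_RInt_unique R_CompleteNormedModule) in H. rewrite H.
    simpl. unfold minus, plus, opp; simpl.
    rewrite sin_IZR_2PI, Rmult_0_r, sin_0. field. exact Hn'.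
Qed.

Lemma RInt_sin_IZR n : RInt (fun t => sin (IZR n * t)) 0 (2 * PI) = 0 :> R.
Proof.
  destruct (Z.eq_dec n 0) as [->|Hn].
  - rewrite (RInt_ext_R _ (fun _ => 0)), RInt_const_R; [ring |].
    intros; simpl. rewrite Rmult_0_l, sin_0. reflexivity.
  - assert (Hn' : IZR n <> 0) by (apply not_0_IZR; exact Hn).
    assert (H : is_RInt (fun t => sin (IZR n * t)) 0 (2 * PI)
      (minus ((fun t => - cos (IZR n * t) / IZR n) (2 * PI))
             ((fun t => - cos (IZR n * t) / IZR n) 0))).
    { apply (is_RInt_derive (fun t => - cos (IZR n * t) / IZR n)).
      - intros x _. auto_derive; [exact I | field; exact Hn'].
      - intros x _. cont_tac. }
    apply (@is_RInt_unique R_CompleteNormedModule) in H. rewrite H.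
    simpl. unfold minus, plus, opp; simpl.
    rewrite cos_IZR_2PI, Rmult_0_r, cos_0. field. exact Hn'.
Qed.

Lemma fc_RInt f n : cont f ->
  fc f n = / (2 * PI) * RInt (fun t => f t * cos (IZR n * t)) 0 (2 * PI).
Proof. intro H. unfold fc. rewrite Rint_eq_RInt; [reflexivity | cont_auto]. Qed.

Lemma fs_RInt f n : cont f ->
  fs f n = / (2 * PI) * RInt (fun t => f t * sin (IZR n * t)) 0 (2 * PI).
Proof. intro H. unfold fs. rewrite Rint_eq_RInt; [reflexivity | cont_auto]. Qed.

Lemma fc_opp f n : cont f -> fc f (- n) = fc f n.
Proof.
  intro H. rewrite !fc_RInt by exact H. f_equal. apply RInt_ext_R. intros.
  rewrite opp_IZR. replace (- IZR n * x) with (- (IZR n * x)) by ring. rewrite cos_neg. reflexivity.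
Qed.

Lemma fs_opp f n : cont f -> fs f (- n) = - fs f n.
Proof.
  intro H. rewrite !fs_RInt by exact H.
  rewrite Ropp_mult_distr_r, <- RInt_opp_cont by cont_auto. f_equal. apply RInt_ext_R. intros.
  rewrite opp_IZR. replace (- IZR n * x) with (- (IZR n * x)) by ring. rewrite sin_neg. ring.
Qed.

Lemma fc_0 f : cont f -> fc f 0 = mean f.
Proof.
  intro H. rewrite fc_RInt by exact H. unfold mean. rewrite Rint_eq_RInt by exact H.
  f_equal. apply RInt_ext_R. intros. simpl. rewrite Rmult_0_l, cos_0. ring.
Qed.

Lemma fs_0 f : cont f -> fs f 0 = 0.
Proof.
  intro H. rewrite fs_RInt by exact H.
  rewrite (RInt_ext_R _ (fun _ => 0)), RInt_const_R; [ring |].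
  intros. simpl. rewrite Rmult_0_l, sin_0. ring.
Qed.

Lemma cont_zero_fun : cont zero_fun.
Proof. unfold zero_fun. cont_auto. Qed.

Lemma cabs2_zero_fun f m : cabs2 f zero_fun m = fc f m ^ 2 + fs f m ^ 2.
Proof.
  assert (Hc : fc zero_fun m = 0).
  { rewrite fc_RInt by apply cont_zero_fun.
    rewrite (RInt_ext_R _ (fun _ => 0)), RInt_const_R; [ring | intros; unfold zero_fun; ring]. }
  assert (Hs : fs zero_fun m = 0).
  { rewrite fs_RInt by apply cont_zero_fun.
    rewrite (RInt_ext_R _ (fun _ => 0)), RInt_const_R; [ring | intros; unfold zero_fun; ring]. }
  unfold cabs2. rewrite Hc, Hs. ring.
Qed.

Lemma cabs2_ge0 x y m : 0 <= cabs2 x y m.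
Proof. unfold cabs2. apply Rplus_le_le_0_compat; apply pow2_ge_0. Qed.

Lemma convolution_cos f n t : cont f ->
  / (2 * PI) * RInt (fun s => f s * cos (IZR n * (t - s))) 0 (2 * PI)
  = cos (IZR n * t) * fc f n + sin (IZR n * t) * fs f n.
Proof.
  intro H. rewrite fc_RInt, fs_RInt by exact H.
  rewrite (RInt_ext_R _ (fun s => cos (IZR n * t) * (f s * cos (IZR n * s))
                                 + sin (IZR n * t) * (f s * sin (IZR n * s)))).
  - rewrite RInt_plus_cont, !RInt_scal_cont by cont_auto. ring.
  - intros. replace (IZR n * (t - x)) with (IZR n * t - IZR n * x) by ring.
    rewrite cos_minus. ring.
Qed.

(** [mode_x P Q w t + i mode_y P Q w t = (P + i Q) e^(-i w t)]. *)
Definition mode_x (P Q w t : R) := P * cos (w * t) + Q * sin (w * t).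
Definition mode_y (P Q w t : R) := Q * cos (w * t) - P * sin (w * t).

Lemma cont_mode_x P Q w : cont (mode_x P Q w).
Proof. unfold mode_x. cont_auto. Qed.

Lemma mode_y_as_mode_x P Q w t : mode_y P Q w t = mode_x Q (- P) w t.
Proof. unfold mode_x, mode_y. ring. Qed.

Lemma periodic_sub_mode x P Q kz :
  periodic x -> periodic (fun t => x t - mode_x P Q (IZR kz) t).
Proof. intros Hp t. unfold mode_x. rewrite Hp, cos_IZR_periodic, sin_IZR_periodic. reflexivity. Qed.

Lemma fc_sub_mode x P Q kz n : cont x ->
  fc (fun t => x t - mode_x P Q (IZR kz) t) n
  = fc x n - P * ((delta0 (kz + n) + delta0 (kz - n)) / 2).
Proof.
  intro H. unfold mode_x. rewrite !fc_RInt by (exact H || cont_auto).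
  rewrite (RInt_ext_R _ (fun t => x t * cos (IZR n * t)
     - (P * / 2 * (cos (IZR (kz + n) * t) + cos (IZR (kz - n) * t))
      + Q * / 2 * (sin (IZR (kz + n) * t) + sin (IZR (kz - n) * t))))).
  - rewrite RInt_minus_cont, RInt_plus_cont, !RInt_scal_cont, !RInt_plus_cont,
      !RInt_cos_IZR, !RInt_sin_IZR by cont_auto.
    field. pose proof PI_RGT_0; lra.
  - intros. rewrite plus_IZR, minus_IZR, !Rmult_plus_distr_r, !Rmult_minus_distr_r,
      cos_plus, cos_minus, sin_plus, sin_minus. field.
Qed.

Lemma fs_sub_mode x P Q kz n : cont x ->
  fs (fun t => x t - mode_x P Q (IZR kz) t) n
  = fs x n - Q * ((delta0 (kz - n) - delta0 (kz + n)) / 2).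
Proof.
  intro H. unfold mode_x. rewrite !fs_RInt by (exact H || cont_auto).
  rewrite (RInt_ext_R _ (fun t => x t * sin (IZR n * t)
     - (P * / 2 * (sin (IZR (kz + n) * t) - sin (IZR (kz - n) * t))
      + Q * / 2 * (cos (IZR (kz - n) * t) - cos (IZR (kz + n) * t))))).
  - rewrite RInt_minus_cont, RInt_plus_cont, !RInt_scal_cont, !RInt_minus_cont,
      !RInt_cos_IZR, !RInt_sin_IZR by cont_auto.
    field. pose proof PI_RGT_0; lra.
  - intros. rewrite plus_IZR, minus_IZR, !Rmult_plus_distr_r, !Rmult_minus_distr_r,
      cos_plus, cos_minus, sin_plus, sin_minus. field.
Qed.

(** * The complex modulus *)

Lemma cnorm_ge0 a b : 0 <= cnorm a b.
Proof. apply sqrt_pos. Qed.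

Lemma cnorm_sq a b : cnorm a b ^ 2 = a ^ 2 + b ^ 2.
Proof. unfold cnorm. rewrite <- Rsqr_pow2, Rsqr_sqrt; [reflexivity | nra]. Qed.

Lemma cnorm_le_abs a b : cnorm a b <= Rabs a + Rabs b.
Proof.
  pose proof (Rabs_pos a). pose proof (Rabs_pos b).
  unfold cnorm. rewrite <- (sqrt_Rsqr (Rabs a + Rabs b)) by lra. apply sqrt_le_1_alt.
  unfold Rsqr. rewrite <- (pow2_abs a), <- (pow2_abs b). nra.
Qed.

Lemma Rabs_le_cnorm_l a b : Rabs a <= cnorm a b.
Proof. unfold cnorm. rewrite <- sqrt_Rsqr_abs. apply sqrt_le_1_alt. unfold Rsqr. nra. Qed.

Lemma Rabs_le_cnorm_r a b : Rabs b <= cnorm a b.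
Proof. unfold cnorm. rewrite <- sqrt_Rsqr_abs. apply sqrt_le_1_alt. unfold Rsqr. nra. Qed.

Lemma cnorm_triangle a b c d : cnorm (a + c) (b + d) <= cnorm a b + cnorm c d.
Proof.
  pose proof (cnorm_ge0 a b). pose proof (cnorm_ge0 c d).
  apply Rsqr_incr_0_var; [| lra]. unfold Rsqr.
  pose proof (cnorm_sq a b). pose proof (cnorm_sq c d). pose proof (cnorm_sq (a + c) (b + d)).
  assert (a * c + b * d <= cnorm a b * cnorm c d).
  { destruct (Rle_lt_dec (a * c + b * d) 0); [nra |].
    apply Rsqr_incr_0_var; [unfold Rsqr | nra].
    replace ((cnorm a b * cnorm c d) * (cnorm a b * cnorm c d))
      with (cnorm a b ^ 2 * cnorm c d ^ 2) by ring.
    pose proof (pow2_ge_0 (a * d - b * c)). nra. }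
  nra.
Qed.

Lemma cnorm_scal c a b : cnorm (c * a) (c * b) = Rabs c * cnorm a b.
Proof.
  unfold cnorm. rewrite <- sqrt_Rsqr_abs, <- sqrt_mult by (apply Rle_0_sqr || nra).
  f_equal. unfold Rsqr. ring.
Qed.

Lemma cnorm_opp a b : cnorm (- a) (- b) = cnorm a b.
Proof. unfold cnorm. f_equal. ring. Qed.

Lemma cnorm_rev_triangle a b c d : Rabs (cnorm a b - cnorm c d) <= cnorm (a - c) (b - d).
Proof.
  pose proof (cnorm_triangle (a - c) (b - d) c d) as H1.
  pose proof (cnorm_triangle (c - a) (d - b) a b) as H2.
  replace (a - c + c) with a in H1 by ring. replace (b - d + d) with b in H1 by ring.
  replace (c - a + a) with c in H2 by ring. replace (d - b + b) with d in H2 by ring.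
  replace (c - a) with (- (a - c)) in H2 by ring. replace (d - b) with (- (b - d)) in H2 by ring.
  rewrite cnorm_opp in H2. apply Rabs_le. lra.
Qed.

Lemma cnorm_eq0 a b : cnorm a b = 0 -> a = 0 /\ b = 0.
Proof. intro H. pose proof (cnorm_sq a b) as E. rewrite H in E. split; nra. Qed.

Lemma cnorm_mode P Q w t : cnorm (mode_x P Q w t) (mode_y P Q w t) = cnorm P Q.
Proof.
  unfold cnorm, mode_x, mode_y. f_equal. pose proof (sin2_cos2 (w * t)). unfold Rsqr in *. nra.
Qed.

Lemma mode_x_translate P Q w t c :
  mode_x P Q w (t + c) = mode_x (mode_x P Q w c) (mode_y P Q w c) w t.
Proof.
  unfold mode_x, mode_y. rewrite Rmult_plus_distr_l, cos_plus, sin_plus. ring.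
Qed.

Lemma mode_y_translate P Q w t c :
  mode_y P Q w (t + c) = mode_y (mode_x P Q w c) (mode_y P Q w c) w t.
Proof.
  unfold mode_x, mode_y. rewrite Rmult_plus_distr_l, cos_plus, sin_plus. ring.
Qed.

(** The left-hand side involves [v / |v|], which is [0] when [v = 0] since [/ 0 = 0]. *)
Lemma cnorm_direction_sub v1 v2 w1 w2 : 0 < cnorm w1 w2 ->
  cnorm (v1 / cnorm v1 v2 - w1 / cnorm w1 w2) (v2 / cnorm v1 v2 - w2 / cnorm w1 w2)
  <= 2 * cnorm (v1 - w1) (v2 - w2) / cnorm w1 w2.
Proof.
  intro Hp. set (r := cnorm v1 v2). set (p := cnorm w1 w2) in *.
  assert (Hr0 : 0 <= r) by apply cnorm_ge0.
  pose proof (cnorm_ge0 (v1 - w1) (v2 - w2)).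
  assert (Hip : 0 < / p) by (apply Rinv_0_lt_compat; exact Hp).
  destruct (Req_dec r 0) as [E|E].
  - destruct (cnorm_eq0 v1 v2 E) as [-> ->]. rewrite E. unfold Rdiv. rewrite Rinv_0, !Rmult_0_r.
    replace (0 - w1 * / p) with (/ p * - w1) by ring. replace (0 - w2 * / p) with (/ p * - w2) by ring.
    rewrite cnorm_scal, cnorm_opp, !Rminus_0_l, cnorm_opp, Rabs_right by lra. fold p.
    apply Rmult_le_reg_r with p; [exact Hp |]. field_simplify; lra.
  - (* [v/r - w/p = (1/r - 1/p) v + (v - w)/p], and [|1/r - 1/p| r = | r - p | / p] *)
    replace (v1 / r - w1 / p) with ((/ r - / p) * v1 + / p * (v1 - w1)) by (field; lra).
    replace (v2 / r - w2 / p) with ((/ r - / p) * v2 + / p * (v2 - w2)) by (field; lra).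
    eapply Rle_trans; [apply cnorm_triangle |].
    rewrite !cnorm_scal, (Rabs_right (/ p)) by lra. fold r.
    pose proof (cnorm_rev_triangle v1 v2 w1 w2) as Hrev. fold r p in Hrev.
    replace (Rabs (/ r - / p) * r) with (Rabs (r - p) / p).
    + apply Rmult_le_reg_r with p; [exact Hp |]. field_simplify; lra.
    + replace (/ r - / p) with (- (r - p) * / (r * p)) by (field; lra).
      rewrite !Rabs_mult, Rabs_Ropp, (Rabs_right (/ (r * p)))
        by (apply Rle_ge, Rlt_le, Rinv_0_lt_compat; nra).
      field. lra.
Qed.

(** * Fejér means *)

Lemma cont_sum_f_R0 (F : nat -> R -> R) M :
  (forall j, cont (F j)) -> cont (fun x => sum_f_R0 (fun j => F j x) M).
Proof.
  intro H. induction M as [|M IH]; intro x; simpl; [apply H |].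
  apply (continuous_plus (fun x => sum_f_R0 (fun j => F j x) M) (F (S M))); [apply IH | apply H].
Qed.

Lemma RInt_sum_f_R0 (F : nat -> R -> R) M a b : (forall j, cont (F j)) ->
  RInt (fun x => sum_f_R0 (fun j => F j x) M) a b = sum_f_R0 (fun j => RInt (F j) a b) M :> R.
Proof.
  intro H. induction M as [|M IH]; simpl; [apply RInt_ext_R; reflexivity |].
  rewrite (RInt_plus_cont (fun x => sum_f_R0 (fun j => F j x) M) (F (S M))), IH;
    [reflexivity | apply cont_sum_f_R0, H | apply H].
Qed.

Lemma sum_f_R0_mult (a b : nat -> R) M :
  sum_f_R0 a M * sum_f_R0 b M = sum_f_R0 (fun j => sum_f_R0 (fun l => b l * a j) M) M.
Proof.
  rewrite Rmult_comm, scal_sum. apply sum_eq. intros j _. apply scal_sum.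
Qed.

Definition cos_sum M x := sum_f_R0 (fun j => cos (INR j * x)) M.
Definition sin_sum M x := sum_f_R0 (fun j => sin (INR j * x)) M.

(** [fejer_kernel M = |sum_(j <= M) e^(ijx)|^2] is [M + 1] times the Fejér kernel. *)
Definition fejer_kernel M x :=
  sum_f_R0 (fun j => sum_f_R0 (fun l => cos (IZR (Z.of_nat l - Z.of_nat j) * x)) M) M.

Lemma fejer_kernel_eq M x : fejer_kernel M x = cos_sum M x ^ 2 + sin_sum M x ^ 2.
Proof.
  unfold fejer_kernel, cos_sum, sin_sum. simpl. rewrite !Rmult_1_r, !sum_f_R0_mult, <- sum_plus.
  apply sum_eq. intros j _. rewrite <- sum_plus. apply sum_eq. intros l _.
  rewrite minus_IZR, <- !INR_IZR_INZ, Rmult_minus_distr_r, cos_minus. ring.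
Qed.

Lemma fejer_kernel_ge0 M x : 0 <= fejer_kernel M x.
Proof. rewrite fejer_kernel_eq. nra. Qed.

Lemma cos_sin_sum_closed M x :
  (cos x - 1) * cos_sum M x - sin x * sin_sum M x = cos (INR (S M) * x) - 1 /\
  sin x * cos_sum M x + (cos x - 1) * sin_sum M x = sin (INR (S M) * x).
Proof.
  induction M as [|M [H1 H2]].
  - unfold cos_sum, sin_sum. simpl. rewrite Rmult_0_l, cos_0, sin_0, Rmult_1_l. split; ring.
  - unfold cos_sum, sin_sum in *. rewrite !tech5, (S_INR (S M)).
    replace ((INR (S M) + 1) * x) with (INR (S M) * x + x) by ring.
    rewrite cos_plus, sin_plus. split; nra.
Qed.

Lemma fejer_kernel_away_from_0 M x : (1 - cos x) * fejer_kernel M x <= 2.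
Proof.
  rewrite fejer_kernel_eq. destruct (cos_sin_sum_closed M x) as [H1 H2].
  pose proof (sin2_cos2 x). pose proof (COS_bound (INR (S M) * x)).
  pose proof (sin2_cos2 (INR (S M) * x)). unfold Rsqr in *.
  assert (E : ((cos x - 1) * cos_sum M x - sin x * sin_sum M x) ^ 2
            + (sin x * cos_sum M x + (cos x - 1) * sin_sum M x) ^ 2
            = 2 * (1 - cos x) * (cos_sum M x ^ 2 + sin_sum M x ^ 2)) by nra.
  rewrite H1, H2 in E. nra.
Qed.

Lemma cont_fejer_kernel M : cont (fejer_kernel M).
Proof.
  apply (cont_sum_f_R0 (fun j x => sum_f_R0 (fun l => cos (IZR (Z.of_nat l - Z.of_nat j) * x)) M)).
  intro j. apply (cont_sum_f_R0 (fun l x => cos (IZR (Z.of_nat l - Z.of_nat j) * x))).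
  intro l. cont_auto.
Qed.

Lemma periodic_fejer_kernel M : periodic (fejer_kernel M).
Proof. intro x. apply sum_eq; intros; apply sum_eq; intros. apply cos_IZR_periodic. Qed.

Lemma sum_delta0 (j L : nat) :
  sum_f_R0 (fun l => delta0 (Z.of_nat l - Z.of_nat j)) L = if le_dec j L then 1 else 0.
Proof.
  unfold delta0. induction L as [|L IH]; cbn [sum_f_R0]; [| rewrite IH];
    repeat destruct (Z.eq_dec _ _); repeat destruct (le_dec _ _); try lra; lia.
Qed.

Lemma RInt_fejer_kernel M : RInt (fejer_kernel M) 0 (2 * PI) = 2 * PI * (INR M + 1) :> R.
Proof.
  unfold fejer_kernel.
  rewrite (RInt_sum_f_R0 (fun j x => sum_f_R0 (fun l => cos (IZR (Z.of_nat l - Z.of_nat j) * x)) M))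
    by (intro j; apply (cont_sum_f_R0 (fun l x => cos (IZR (Z.of_nat l - Z.of_nat j) * x))); cont_auto).
  rewrite (sum_eq _ (fun _ => 2 * PI)), sum_cte, S_INR; [ring |].
  intros j Hj.
  rewrite (RInt_sum_f_R0 (fun l x => cos (IZR (Z.of_nat l - Z.of_nat j) * x))) by cont_auto.
  rewrite (sum_eq _ (fun l => delta0 (Z.of_nat l - Z.of_nat j) * (2 * PI)))
    by (intros; rewrite RInt_cos_IZR; ring).
  rewrite <- scal_sum, sum_delta0. destruct (le_dec j M); [ring | lia].
Qed.

Lemma fejer_convolution f M t : cont f ->
  / (2 * PI) * RInt (fun s => f s * fejer_kernel M (t - s)) 0 (2 * PI)
  = sum_f_R0 (fun j => sum_f_R0 (fun l =>
       cos (IZR (Z.of_nat l - Z.of_nat j) * t) * fc f (Z.of_nat l - Z.of_nat j)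
     + sin (IZR (Z.of_nat l - Z.of_nat j) * t) * fs f (Z.of_nat l - Z.of_nat j)) M) M.
Proof.
  intro Hf.
  rewrite (RInt_ext_R _ (fun s => sum_f_R0 (fun j => sum_f_R0 (fun l =>
        f s * cos (IZR (Z.of_nat l - Z.of_nat j) * (t - s))) M) M)).
  2: { intros s _. unfold fejer_kernel. rewrite scal_sum. apply sum_eq. intros j _.
       rewrite Rmult_comm, scal_sum. apply sum_eq. intros; ring. }
  rewrite (RInt_sum_f_R0
    (fun j s => sum_f_R0 (fun l => f s * cos (IZR (Z.of_nat l - Z.of_nat j) * (t - s))) M)).
  2: { intro j. apply (cont_sum_f_R0 (fun l s => f s * cos (IZR (Z.of_nat l - Z.of_nat j) * (t - s)))).
       cont_auto. }
  rewrite scal_sum. apply sum_eq. intros j _.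
  rewrite (RInt_sum_f_R0 (fun l s => f s * cos (IZR (Z.of_nat l - Z.of_nat j) * (t - s)))) by cont_auto.
  rewrite Rmult_comm, scal_sum. apply sum_eq. intros l _.
  rewrite Rmult_comm. apply convolution_cos, Hf.
Qed.

Lemma Rabs_cos_sin_comb_le a p q : Rabs (cos a * p + sin a * q) <= cnorm p q.
Proof.
  unfold cnorm. rewrite <- sqrt_Rsqr_abs. apply sqrt_le_1_alt.
  pose proof (sin2_cos2 a) as E. unfold Rsqr in *.
  assert (0 <= (sin a * p - cos a * q) ^ 2) by apply pow2_ge_0.
  assert ((cos a * p + sin a * q) * (cos a * p + sin a * q) + (sin a * p - cos a * q) ^ 2
          = (sin a * sin a + cos a * cos a) * (p ^ 2 + q ^ 2)) by ring.
  rewrite E in *. lra.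
Qed.

Definition coeff_abs f n := cnorm (fc f n) (fs f n).

Lemma fejer_mean_le f M t B : cont f -> (forall M, zpart (coeff_abs f) M <= B) ->
  Rabs (/ (2 * PI) * RInt (fun s => f s * fejer_kernel M (t - s)) 0 (2 * PI)) <= (INR M + 1) * B.
Proof.
  intros Hf HB. rewrite fejer_convolution by exact Hf.
  eapply Rle_trans; [apply sum_f_R0_triangle |].
  apply Rle_trans with (sum_f_R0 (fun _ => B) M); [| rewrite sum_cte, S_INR; lra].
  apply sum_Rle. intros j Hj.
  eapply Rle_trans; [apply sum_f_R0_triangle |].
  apply Rle_trans with (sum_f_R0 (fun l => coeff_abs f (Z.of_nat l - Z.of_nat j)%Z) M).
  - apply sum_Rle. intros. apply Rabs_cos_sin_comb_le.
  - eapply Rle_trans; [apply shifted_sum_le_zpart; [intro; apply cnorm_ge0 | exact Hj] | apply HB].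
Qed.

Lemma cont_at_eps f t eps : cont f -> eps > 0 ->
  exists d, d > 0 /\ forall y, Rabs (y - t) < d -> Rabs (f y - f t) < eps.
Proof.
  intros Hf He.
  assert (H : continuity_pt f t) by apply continuity_pt_filterlim, Hf.
  destruct (H eps He) as [d [Hd H']]. exists d. split; [exact Hd |]. intros y Hy.
  destruct (Req_dec y t) as [->|Hne].
  - rewrite Rminus_diag, Rabs_R0. lra.
  - apply (H' y). repeat split; auto.
Qed.

Lemma cos_le_cos_margin d x : 0 < d <= PI -> d <= x <= 2 * PI - d -> cos x <= cos d.
Proof.
  intros Hd Hx. destruct (Rle_lt_dec x PI).
  - destruct (Req_dec x d) as [->|]; [lra |]. left. apply cos_decreasing_1; lra.
  - replace (cos x) with (cos (2 * PI - x)) by (rewrite cos_minus, cos_2PI, sin_2PI; ring).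
    destruct (Req_dec (2 * PI - x) d) as [->|]; [lra |]. left. apply cos_decreasing_1; lra.
Qed.

Lemma RInt_mul_fejer_kernel_le psi M d eps K : cont psi -> 0 < d <= PI ->
  (forall x, 0 <= psi x) ->
  (forall x, 0 < x < d \/ 2 * PI - d < x < 2 * PI -> psi x <= eps) ->
  (forall x, d <= x <= 2 * PI - d -> psi x <= K) ->
  RInt (fun x => psi x * fejer_kernel M x) 0 (2 * PI)
  <= eps * (2 * PI * (INR M + 1)) + 2 * PI * (K * (2 / (1 - cos d))).
Proof.
  intros Hpsi Hd Hpos Hnear Hfar.
  pose proof PI_RGT_0.
  pose proof (cont_fejer_kernel M) as HK.
  assert (Hcd : cos d < 1) by (rewrite <- cos_0; apply cos_decreasing_1; lra).
  assert (HK0 : 0 <= K) by (eapply Rle_trans; [apply (Hpos d) | apply Hfar; lra]).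
  (* split [0, 2 pi] at [d] and [2 pi - d]; on the middle piece the kernel is at most
     [2 / (1 - cos d)] *)
  rewrite <- (RInt_Chasles_cont _ 0 d (2 * PI)), <- (RInt_Chasles_cont _ d (2 * PI - d) (2 * PI))
    by cont_auto.
  assert (B1 : RInt (fun x => psi x * fejer_kernel M x) 0 d
               <= eps * RInt (fejer_kernel M) 0 d).
  { rewrite <- RInt_scal_cont by exact HK. apply RInt_le_cont; [cont_auto | cont_auto | lra |].
    intros x Hx. apply Rmult_le_compat_r; [apply fejer_kernel_ge0 | apply Hnear; lra]. }
  assert (B3 : RInt (fun x => psi x * fejer_kernel M x) (2 * PI - d) (2 * PI)
               <= eps * RInt (fejer_kernel M) (2 * PI - d) (2 * PI)).
  { rewrite <- RInt_scal_cont by exact HK. apply RInt_le_cont; [cont_auto | cont_auto | lra |].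
    intros x Hx. apply Rmult_le_compat_r; [apply fejer_kernel_ge0 | apply Hnear; lra]. }
  assert (B2 : RInt (fun x => psi x * fejer_kernel M x) d (2 * PI - d)
               <= RInt (fun _ => K * (2 / (1 - cos d))) d (2 * PI - d)).
  { apply RInt_le_cont; [cont_auto | cont_auto | lra |]. intros x Hx.
    apply Rmult_le_compat; [apply Hpos | apply fejer_kernel_ge0 | apply Hfar; lra |].
    pose proof (cos_le_cos_margin d x Hd ltac:(lra)).
    pose proof (fejer_kernel_away_from_0 M x). pose proof (fejer_kernel_ge0 M x).
    apply Rmult_le_reg_l with (1 - cos d); [lra |].
    replace ((1 - cos d) * (2 / (1 - cos d))) with 2 by (field; lra). nra. }
  rewrite RInt_const_R in B2.
  assert (Hmid : 0 <= RInt (fejer_kernel M) d (2 * PI - d))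
    by (apply RInt_ge0_cont; [exact HK | lra | intros; apply fejer_kernel_ge0]).
  assert (Htot : RInt (fejer_kernel M) 0 d + RInt (fejer_kernel M) d (2 * PI - d)
                 + RInt (fejer_kernel M) (2 * PI - d) (2 * PI) = 2 * PI * (INR M + 1)).
  { rewrite !RInt_Chasles_cont by exact HK. apply RInt_fejer_kernel. }
  assert (0 <= K * (2 / (1 - cos d)))
    by (apply Rmult_le_pos; [lra | apply Rlt_le, Rdiv_lt_0_compat; lra]).
  assert (0 <= eps) by (eapply Rle_trans; [apply (Hpos (d / 2)) | apply Hnear; lra]).
  assert ((2 * PI - d - d) * (K * (2 / (1 - cos d))) <= 2 * PI * (K * (2 / (1 - cos d))))
    by (apply Rmult_le_compat_r; lra).
  nra.
Qed.

Lemma fejer_mean_sub f M t : cont f -> periodic f ->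
  / (2 * PI) * RInt (fun s => f s * fejer_kernel M (t - s)) 0 (2 * PI) / (INR M + 1) - f t
  = / (2 * PI * (INR M + 1)) * RInt (fun x => (f (t - x) - f t) * fejer_kernel M x) 0 (2 * PI).
Proof.
  intros Hf Pf. pose proof PI_RGT_0. pose proof (pos_INR M).
  pose proof (cont_fejer_kernel M) as HK.
  rewrite (RInt_ext_R (fun x => (f (t - x) - f t) * fejer_kernel M x)
                      (fun x => f (t - x) * fejer_kernel M x - f t * fejer_kernel M x))
    by (intros; ring).
  rewrite RInt_minus_cont, RInt_scal_cont, RInt_fejer_kernel by cont_auto.
  rewrite <- (RInt_periodic_reflect (fun s => f s * fejer_kernel M (t - s)) t).
  - rewrite (RInt_ext_R _ (fun x => f (t - x) * fejer_kernel M x))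
      by (intros; replace (t - (t - x)) with x by ring; reflexivity).
    field. lra.
  - cont_auto.
  - intro s. rewrite Pf, <- (periodic_fejer_kernel M (t - (s + 2 * PI))). do 2 f_equal. ring.
Qed.

Lemma fejer_mean_approx f t eps : cont f -> periodic f -> eps > 0 -> exists M,
  Rabs (/ (2 * PI) * RInt (fun s => f s * fejer_kernel M (t - s)) 0 (2 * PI) / (INR M + 1) - f t)
  <= eps.
Proof.
  intros Hf Pf He. pose proof PI_RGT_0.
  destruct (cont_at_eps f t (eps / 2) Hf) as [d [Hd Hcd]]; [lra |].
  set (d0 := Rmin d PI).
  assert (Hd0 : 0 < d0 <= PI) by (split; [apply Rmin_glb_lt; lra | apply Rmin_r]).
  assert (Hd0d : d0 <= d) by apply Rmin_l.
  set (psi := fun x => Rabs (f (t - x) - f t)).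
  assert (Cpsi : cont psi) by (unfold psi; cont_auto).
  destruct (continuity_ab_maj psi d0 (2 * PI - d0)) as [xm [Hxm _]]; [lra | |].
  { intros; apply continuity_pt_filterlim, Cpsi. }
  assert (Hcos : cos d0 < 1) by (rewrite <- cos_0; apply cos_decreasing_1; lra).
  set (C0 := 2 * PI * (psi xm * (2 / (1 - cos d0)))).
  assert (HC0 : 0 <= C0).
  { apply Rmult_le_pos; [lra |]. apply Rmult_le_pos; [apply Rabs_pos |].
    apply Rlt_le, Rdiv_lt_0_compat; lra. }
  destruct (INR_archimed (eps * PI) C0) as [M HM]; [nra |].
  exists M. pose proof (pos_INR M). pose proof (cont_fejer_kernel M).
  rewrite fejer_mean_sub by assumption.
  rewrite Rabs_mult, Rabs_right by (apply Rle_ge, Rlt_le, Rinv_0_lt_compat; nra).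
  assert (Hint : RInt (fun x => psi x * fejer_kernel M x) 0 (2 * PI)
                 <= eps / 2 * (2 * PI * (INR M + 1)) + C0).
  { apply RInt_mul_fejer_kernel_le; [exact Cpsi | exact Hd0 | intro; apply Rabs_pos | | exact Hxm].
    intros x Hx. left. unfold psi. destruct Hx as [Hx|Hx].
    - apply Hcd. replace (t - x - t) with (- x) by ring. rewrite Rabs_Ropp, Rabs_right; lra.
    - rewrite <- (Pf (t - x)). apply Hcd.
      replace (t - x + 2 * PI - t) with (2 * PI - x) by ring. rewrite Rabs_right; lra. }
  assert (Habs : Rabs (RInt (fun x => (f (t - x) - f t) * fejer_kernel M x) 0 (2 * PI))
                 <= RInt (fun x => psi x * fejer_kernel M x) 0 (2 * PI)).
  { eapply Rle_trans; [apply RInt_abs_le_cont; [cont_auto | lra] |].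
    apply Req_le, RInt_ext_R. intros. unfold psi.
    rewrite Rabs_mult, (Rabs_right (fejer_kernel M x)) by apply Rle_ge, fejer_kernel_ge0. reflexivity. }
  apply Rmult_le_reg_l with (2 * PI * (INR M + 1)); [nra |].
  rewrite <- Rmult_assoc, Rinv_r, Rmult_1_l by nra.
  nra.
Qed.

Lemma Rabs_le_coeff_l1 f B t : cont f -> periodic f ->
  (forall M, zpart (coeff_abs f) M <= B) -> Rabs (f t) <= B.
Proof.
  intros Hf Pf HB.
  apply Rnot_lt_le. intro Hlt.
  destruct (fejer_mean_approx f t ((Rabs (f t) - B) / 2) Hf Pf) as [M HM]; [lra |].
  pose proof (fejer_mean_le f M t B Hf HB) as HA.
  set (A := / (2 * PI) * RInt (fun s => f s * fejer_kernel M (t - s)) 0 (2 * PI)) in *.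
  pose proof (pos_INR M).
  assert (Rabs (A / (INR M + 1)) <= B).
  { unfold Rdiv. rewrite Rabs_mult, (Rabs_right (/ _)) by (apply Rle_ge, Rlt_le, Rinv_0_lt_compat; lra).
    apply Rmult_le_reg_r with (INR M + 1); [lra |]. rewrite Rmult_assoc, Rinv_l; lra. }
  pose proof (Rabs_triang_inv (f t) (A / (INR M + 1))).
  rewrite <- Rabs_Ropp in HM.
  replace (- (A / (INR M + 1) - f t)) with (f t - A / (INR M + 1)) in HM by ring.
  lra.
Qed.

(** * Distance of a loop to its resonant Fourier mode *)

(** The [m]-th Fourier coefficient of [x + i y] is [coeff_re x y m + i coeff_im x y m]. *)
Definition coeff_re x y m := fc x m + fs y m.
Definition coeff_im x y m := fc y m - fs x m.

Lemma cabs2_eq x y m : cabs2 x y m = cnorm (coeff_re x y m) (coeff_im x y m) ^ 2.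
Proof. rewrite cnorm_sq. reflexivity. Qed.

Definition kin_weight x y kz m := (IZR m + IZR kz) ^ 2 * cabs2 x y m.

Lemma kin_weight_ge0 x y kz m : 0 <= kin_weight x y kz m.
Proof. apply Rmult_le_pos; [apply pow2_ge_0 | apply cabs2_ge0]. Qed.

Lemma one_le_sq_IZR m : m <> 0%Z -> 1 <= IZR m ^ 2.
Proof.
  intro Hm. destruct (Z_le_gt_dec 1 m) as [h|h].
  - apply IZR_le in h. nra.
  - assert (h' : (m <= -1)%Z) by lia. apply IZR_le in h'. nra.
Qed.

Lemma one_plus_sq_le_resonant m kz : (m + kz <> 0)%Z ->
  1 + IZR m ^ 2 <= (3 + 2 * IZR kz ^ 2) * (IZR m + IZR kz) ^ 2.
Proof.
  intro H. pose proof (one_le_sq_IZR _ H) as Hu. rewrite plus_IZR in Hu.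
  pose proof (pow2_ge_0 (IZR m + 2 * IZR kz)). pose proof (pow2_ge_0 (IZR kz)). nra.
Qed.

Lemma sqrt_le_amgm E s : 0 <= E -> 0 < s -> sqrt E <= / (2 * s) + s * E / 2.
Proof.
  intros HE Hs. pose proof (sqrt_pos E). pose proof (sqrt_sqrt E HE).
  assert (0 <= (s * sqrt E - 1) ^ 2) by apply pow2_ge_0.
  apply Rmult_le_reg_l with (2 * s); [lra |]. field_simplify; nra.
Qed.

(** [|c_m|^2] for [x + i y] minus its [e^(-i kz t)] component. *)
Definition cabs2_nonresonant x y kz m := if Z.eq_dec m (- kz) then 0 else cabs2 x y m.

Section ResonantMode.
Variables x y : R -> R.
Variable kz : Z.
Hypotheses (Hkz : kz <> 0%Z) (Cx : cont x) (Cy : cont y).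

Let P := coeff_re x y (- kz).
Let Q := coeff_im x y (- kz).
Let D := cabs2_nonresonant x y kz.

Lemma delta0_cases n :
  (n = kz /\ delta0 (kz + n) = 0 /\ delta0 (kz - n) = 1) \/
  (n = (- kz)%Z /\ delta0 (kz + n) = 1 /\ delta0 (kz - n) = 0) \/
  (n <> kz /\ n <> (- kz)%Z /\ delta0 (kz + n) = 0 /\ delta0 (kz - n) = 0).
Proof.
  unfold delta0. destruct (Z.eq_dec n kz) as [->|h1]; [left|right].
  - repeat destruct (Z.eq_dec _ _); repeat split; auto; lia.
  - destruct (Z.eq_dec n (- kz)) as [->|h2]; [left|right];
      repeat destruct (Z.eq_dec _ _); repeat split; auto; lia.
Qed.

(** The [n]-th coefficient of [Re zeta] is [(c_n + conj c_(-n)) / 2], and similarly for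
    [Im zeta], which is why both [D n] and [D (-n)] appear. *)
Ltac nonresonant_coeff_tac n :=
  unfold coeff_abs; rewrite cnorm_sq, fc_sub_mode, fs_sub_mode by assumption;
  unfold D, cabs2_nonresonant, cabs2, P, Q, coeff_re, coeff_im;
  destruct (delta0_cases n) as [(-> & -> & ->)|[(-> & -> & ->)|(h1 & h2 & -> & ->)]];
  rewrite ?Z.opp_involutive; repeat rewrite fc_opp by assumption; repeat rewrite fs_opp by assumption;
  repeat destruct (Z.eq_dec _ _); try lia;
  match goal with |- context [fc x ?m] =>
    pose proof (pow2_ge_0 (fc x m + fs y m)); pose proof (pow2_ge_0 (fc y m - fs x m));
    pose proof (pow2_ge_0 (fc y m)); pose proof (pow2_ge_0 (fs y m));
    pose proof (pow2_ge_0 (fc x m)); pose proof (pow2_ge_0 (fs x m)) end; nra.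

Lemma coeff_abs_re_sub_mode_sq n :
  coeff_abs (fun t => x t - mode_x P Q (IZR kz) t) n ^ 2 <= (D n + D (- n)) / 2.
Proof. nonresonant_coeff_tac n. Qed.

Lemma coeff_abs_im_sub_mode_sq n :
  coeff_abs (fun t => y t - mode_x Q (- P) (IZR kz) t) n ^ 2 <= (D n + D (- n)) / 2.
Proof. nonresonant_coeff_tac n. Qed.

Lemma D_weighted_le n : (1 + IZR n ^ 2) * D n <= (3 + 2 * IZR kz ^ 2) * kin_weight x y kz n.
Proof.
  unfold D, cabs2_nonresonant, kin_weight.
  pose proof (cabs2_ge0 x y n). pose proof (pow2_ge_0 (IZR kz)).
  destruct (Z.eq_dec n (- kz)).
  - rewrite Rmult_0_r. apply Rmult_le_pos; [lra | apply Rmult_le_pos; [apply pow2_ge_0 | lra]].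
  - rewrite <- Rmult_assoc. apply Rmult_le_compat_r; [lra |].
    apply one_plus_sq_le_resonant. lia.
Qed.

Lemma zpart_coeff_abs_le g H :
  (forall n, coeff_abs g n ^ 2 <= (D n + D (- n)) / 2) ->
  (forall M, zpart (kin_weight x y kz) M <= H) ->
  forall M, zpart (coeff_abs g) M <= 5 / 2 + (3 + 2 * IZR kz ^ 2) / 2 * H.
Proof.
  intros Hg HH M.
  assert (HD : forall m, 0 <= D m)
    by (intro m; unfold D, cabs2_nonresonant; destruct (Z.eq_dec _ _); [lra | apply cabs2_ge0]).
  (* AM-GM with weight [1 + n^2] on each coefficient, then [sum 1 / (1 + n^2) <= 5] *)
  assert (Hpt : forall n, coeff_abs g n
     <= / 2 * / (1 + IZR n ^ 2) + (3 + 2 * IZR kz ^ 2) / 4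
                                    * (kin_weight x y kz n + kin_weight x y kz (- n))).
  { intro n. pose proof (pow2_ge_0 (IZR n)).
    eapply Rle_trans.
    { unfold coeff_abs, cnorm at 1. apply sqrt_le_1_alt. rewrite <- cnorm_sq.
      apply Hg. }
    eapply Rle_trans; [apply (sqrt_le_amgm _ (1 + IZR n ^ 2)) | ];
      [pose proof (HD n); pose proof (HD (- n)%Z); lra | lra |].
    pose proof (D_weighted_le n). pose proof (D_weighted_le (- n)) as Hm.
    rewrite opp_IZR in Hm. replace ((- IZR n) ^ 2) with (IZR n ^ 2) in Hm by ring.
    rewrite Rinv_mult. lra. }
  eapply Rle_trans; [apply zpart_le, Hpt |].
  rewrite zpart_plus, !zpart_scal, zpart_plus, (zpart_opp (kin_weight x y kz) M).
  pose proof (zpart_inv_1_plus_sq M). pose proof (HH M). pose proof (pow2_ge_0 (IZR kz)).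
  nra.
Qed.

Lemma resonant_mode_approx H t : periodic x -> periodic y ->
  (forall M, zpart (kin_weight x y kz) M <= H) ->
  cnorm (x t - mode_x P Q (IZR kz) t) (y t - mode_y P Q (IZR kz) t)
  <= 5 + (3 + 2 * IZR kz ^ 2) * H.
Proof.
  intros Px Py HH. rewrite mode_y_as_mode_x.
  eapply Rle_trans; [apply cnorm_le_abs |].
  assert (Hxm : Rabs (x t - mode_x P Q (IZR kz) t) <= 5 / 2 + (3 + 2 * IZR kz ^ 2) / 2 * H).
  { apply (Rabs_le_coeff_l1 (fun t => x t - mode_x P Q (IZR kz) t)).
    - pose proof (cont_mode_x P Q (IZR kz)). cont_auto.
    - apply periodic_sub_mode, Px.
    - apply zpart_coeff_abs_le; [apply coeff_abs_re_sub_mode_sq | exact HH]. }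
  assert (Hym : Rabs (y t - mode_x Q (- P) (IZR kz) t) <= 5 / 2 + (3 + 2 * IZR kz ^ 2) / 2 * H).
  { apply (Rabs_le_coeff_l1 (fun t => y t - mode_x Q (- P) (IZR kz) t)).
    - pose proof (cont_mode_x Q (- P) (IZR kz)). cont_auto.
    - apply periodic_sub_mode, Py.
    - apply zpart_coeff_abs_le; [apply coeff_abs_im_sub_mode_sq | exact HH]. }
  lra.
Qed.

End ResonantMode.

(** * Bounds from the action *)

Lemma rsum_ge0 n f : (forall i, (i < n)%nat -> 0 <= f i) -> 0 <= rsum n f.
Proof.
  induction n as [|n IH]; cbn [rsum]; intro H; [lra |].
  pose proof (H n ltac:(lia)). pose proof (IH ltac:(intros; apply H; lia)). lra.
Qed.

Lemma rsum_ge_term n f i : (forall i, (i < n)%nat -> 0 <= f i) -> (i < n)%nat -> f i <= rsum n f.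
Proof.
  induction n as [|n IH]; cbn [rsum]; intros H Hi; [lia |].
  destruct (Nat.eq_dec i n) as [->|].
  - pose proof (rsum_ge0 n f ltac:(intros; apply H; lia)). lra.
  - pose proof (H n ltac:(lia)). pose proof (IH ltac:(intros; apply H; lia) ltac:(lia)). lra.
Qed.

Lemma rsum_le_const n f c : (forall i, (i < n)%nat -> f i <= c) -> rsum n f <= INR n * c.
Proof.
  induction n as [|n IH]; cbn [rsum]; intro H; [simpl; lra |].
  rewrite S_INR. pose proof (H n ltac:(lia)). pose proof (IH ltac:(intros; apply H; lia)). lra.
Qed.

Lemma cont_rsum n (F : nat -> R -> R) :
  (forall i, (i < n)%nat -> cont (F i)) -> cont (fun t => rsum n (fun i => F i t)).
Proof.
  induction n as [|n IH]; cbn [rsum]; intros H x; [apply continuous_const |].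
  apply (continuous_plus (fun t => rsum n (fun i => F i t)) (F n));
    [apply IH; intros; apply H; lia | apply H; lia].
Qed.

Lemma cont_U_trunc N q M : in_Lambda N q -> cont (U_trunc N q M).
Proof.
  intro HL.
  assert (Hpos : 0 < / INR (S M)) by (apply Rinv_0_lt_compat, lt_0_INR; lia).
  apply cont_rsum. intros i Hi. apply cont_rsum. intros j Hj.
  destruct (Nat.ltb i j); [| cont_auto].
  destruct (HL i Hi) as ([Xi _] & [Yi _] & [Zi _]). destruct (HL j Hj) as ([Xj _] & [Yj _] & [Zj _]).
  apply cont_of_continuity in Xi, Yi, Zi, Xj, Yj, Zj.
  (* [Rmax a b = (a + b + |a - b|) / 2] is a continuous expression *)
  apply (cont_ext
    (fun t => / ((dist3 q i j t + / INR (S M) + Rabs (dist3 q i j t - / INR (S M))) / 2))).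
  { intro t. f_equal. destruct (Rle_lt_dec (dist3 q i j t) (/ INR (S M))).
    - rewrite Rmax_right, Rabs_left1 by lra. lra.
    - rewrite Rmax_left, Rabs_right by lra. lra. }
  intro t. apply continuous_Rinv_comp; [unfold dist3; cont_tac |].
  pose proof (Rabs_pos (dist3 q i j t - / INR (S M))). pose proof (sqrt_pos
    ((lx q i t - lx q j t) ^ 2 + (ly q i t - ly q j t) ^ 2 + (lz q i t - lz q j t) ^ 2)).
  unfold dist3 in *. lra.
Qed.

Lemma Rint_U_trunc_ge0 N q M : in_Lambda N q -> 0 <= Rint (U_trunc N q M).
Proof.
  intro HL. pose proof (cont_U_trunc N q M HL).
  rewrite Rint_eq_RInt by assumption. apply RInt_ge0_cont; [assumption | pose proof PI_RGT_0; lra |].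
  intros t _. apply rsum_ge0. intros i _. apply rsum_ge0. intros j _.
  destruct (Nat.ltb i j); [| lra]. apply Rlt_le, Rinv_0_lt_compat.
  apply Rlt_le_trans with (/ INR (S M)); [apply Rinv_0_lt_compat, lt_0_INR; lia | apply Rmax_r].
Qed.

Lemma H1_weight_ge0 x y m : 0 <= H1_weight x y m.
Proof. apply Rmult_le_pos; [pose proof (pow2_ge_0 (IZR m)); lra | apply cabs2_ge0]. Qed.

Lemma cabs2_le x y m : cabs2 x y m <= 2 * (cabs2 x zero_fun m + cabs2 y zero_fun m).
Proof.
  rewrite !cabs2_zero_fun. unfold cabs2.
  pose proof (pow2_ge_0 (fc x m - fs y m)). pose proof (pow2_ge_0 (fc y m + fs x m)). nra.
Qed.

Lemma kin_weight_summable x y kz : in_H1 x -> in_H1 y -> zsummable (kin_weight x y kz).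
Proof.
  intros (_ & _ & Sx) (_ & _ & Sy).
  set (c := 4 * (1 + IZR kz ^ 2)).
  assert (Hc : 0 <= c) by (unfold c; pose proof (pow2_ge_0 (IZR kz)); lra).
  apply (zsum_le _ (kin_weight_ge0 x y kz)
           (c * (zsum (H1_weight x zero_fun) + zsum (H1_weight y zero_fun)))).
  intro M.
  eapply Rle_trans;
    [apply (zpart_le _ (fun m => c * (H1_weight x zero_fun m + H1_weight y zero_fun m))) |].
  - intro m. unfold kin_weight, H1_weight, c.
    pose proof (cabs2_le x y m). pose proof (cabs2_ge0 x y m).
    pose proof (cabs2_ge0 x zero_fun m). pose proof (cabs2_ge0 y zero_fun m).
    assert ((IZR m + IZR kz) ^ 2 <= 2 * (1 + IZR kz ^ 2) * (1 + IZR m ^ 2)).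
    { pose proof (pow2_ge_0 (IZR m - IZR kz)). pose proof (pow2_ge_0 (IZR m * IZR kz)). nra. }
    pose proof (pow2_ge_0 (IZR m + IZR kz)). nra.
  - rewrite zpart_scal, zpart_plus. apply Rmult_le_compat_l; [exact Hc |].
    apply Rplus_le_compat; apply zpart_le_zsum; (apply H1_weight_ge0 || assumption).
Qed.

Lemma kin_weight_le_H1_weight z m : kin_weight z zero_fun 0 m <= H1_weight z zero_fun m.
Proof.
  unfold kin_weight, H1_weight. rewrite Rplus_0_r.
  pose proof (cabs2_ge0 z zero_fun m). nra.
Qed.

Lemma kin_weight_summable_z z : in_H1 z -> zsummable (kin_weight z zero_fun 0).
Proof.
  intros (_ & _ & Sz).
  apply (zsum_le_scal _ _ 1 (kin_weight_ge0 z zero_fun 0) ltac:(lra) (H1_weight_ge0 z zero_fun) Sz).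
  intro m. rewrite Rmult_1_l. apply kin_weight_le_H1_weight.
Qed.

Lemma action_trunc_bounds N q kz C : in_Lambda N q -> action_trunc (IZR kz) N q 0 <= C ->
  forall i, (i < N)%nat ->
  zsum (kin_weight (lx q i) (ly q i) kz) <= C / PI /\ zsum (kin_weight (lz q i) zero_fun 0) <= C / PI.
Proof.
  intros HL HA i Hi. unfold action_trunc in HA.
  pose proof (Rint_U_trunc_ge0 N q 0 HL). pose proof PI_RGT_0.
  assert (Hterm : forall i, (i < N)%nat ->
    0 <= zsum (kin_weight (lx q i) (ly q i) kz) /\ 0 <= zsum (kin_weight (lz q i) zero_fun 0)).
  { intros j Hj. destruct (HL j Hj) as (Xj & Yj & Zj). split.
    - apply zsum_ge0; [apply kin_weight_ge0 | apply kin_weight_summable; assumption].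
    - apply zsum_ge0; [apply kin_weight_ge0 | apply kin_weight_summable_z; assumption]. }
  set (T := fun i => kin (IZR kz) (lx q i) (ly q i) + kin 0 (lz q i) zero_fun) in *.
  assert (ET : forall i, T i = 2 * PI * zsum (kin_weight (lx q i) (ly q i) kz)
                               + 2 * PI * zsum (kin_weight (lz q i) zero_fun 0)) by reflexivity.
  assert (HT : forall i, (i < N)%nat -> 0 <= T i)
    by (intros j Hj; rewrite ET; destruct (Hterm j Hj); nra).
  pose proof (rsum_ge_term N T i HT Hi). rewrite ET in *. destruct (Hterm i Hi).
  split; apply Rmult_le_reg_l with PI; try lra; unfold Rdiv;
    rewrite <- Rmult_assoc, (Rmult_comm PI C), Rmult_assoc, Rinv_r, Rmult_1_r by lra; nra.
Qed.

Lemma fc_0_translate z z0 c : cont z0 -> periodic z0 -> mean z0 = 0 ->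
  (forall t, z t = z0 (t + c)) -> fc z 0 = 0.
Proof.
  intros C0 P0 M0 E.
  assert (Cz : cont z)
    by (apply (cont_ext (fun t => z0 (t + c))); [intro; symmetry; apply E | cont_auto]).
  rewrite fc_0 by exact Cz. unfold mean in *. rewrite Rint_eq_RInt in * by assumption.
  rewrite (RInt_ext_R z (fun t => z0 (t + c))), RInt_periodic_translate by auto. exact M0.
Qed.

Lemma H1sq_le_kin z K : in_H1 z -> fc z 0 = 0 -> zsum (kin_weight z zero_fun 0) <= K ->
  H1sq z zero_fun <= 2 * PI * (2 * K).
Proof.
  intros Hz H0 HK. destruct Hz as (Cz & Pz & Sz). apply cont_of_continuity in Cz.
  unfold H1sq. pose proof PI_RGT_0.
  (* the mean vanishes, so [1 + m^2 <= 2 m^2] on the remaining modes *)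
  assert (zsum (H1_weight z zero_fun) <= 2 * zsum (kin_weight z zero_fun 0)).
  { apply (zsum_le_scal _ _ 2 (H1_weight_ge0 z zero_fun)); [lra | apply kin_weight_ge0 | |].
    - apply kin_weight_summable_z. split; [| split]; auto.
      intro x. apply continuity_pt_filterlim, Cz.
    - intro m. unfold H1_weight, kin_weight. rewrite Rplus_0_r.
      pose proof (cabs2_ge0 z zero_fun m).
      destruct (Z.eq_dec m 0) as [->|Hm].
      + rewrite cabs2_zero_fun, H0, fs_0 by exact Cz. simpl. lra.
      + pose proof (one_le_sq_IZR m Hm). nra. }
  nra.
Qed.

Lemma H1_weight_le_resonant x y kz m : H1_weight x y m <=
  (if Z.eq_dec m (- kz) then (1 + IZR kz ^ 2) * cabs2 x y (- kz) else 0)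
  + (3 + 2 * IZR kz ^ 2) * kin_weight x y kz m.
Proof.
  unfold H1_weight, kin_weight. pose proof (cabs2_ge0 x y m). pose proof (pow2_ge_0 (IZR kz)).
  destruct (Z.eq_dec m (- kz)) as [->|Hm].
  - rewrite opp_IZR. pose proof (pow2_ge_0 (- IZR kz + IZR kz)). nra.
  - rewrite Rplus_0_l, <- Rmult_assoc. apply Rmult_le_compat_r; [lra |].
    apply one_plus_sq_le_resonant. lia.
Qed.

Lemma H1sq_le_resonant x y kz H : in_H1 x -> in_H1 y ->
  zsum (kin_weight x y kz) <= H ->
  H1sq x y <= 2 * PI * ((1 + IZR kz ^ 2) * cnorm (coeff_re x y (- kz)) (coeff_im x y (- kz)) ^ 2
                        + (3 + 2 * IZR kz ^ 2) * H).
Proof.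
  intros Hx Hy HH. unfold H1sq. pose proof PI_RGT_0.
  apply Rmult_le_compat_l; [lra |].
  rewrite <- cabs2_eq. pose proof (cabs2_ge0 x y (- kz)). pose proof (pow2_ge_0 (IZR kz)).
  apply (zsum_le _ (H1_weight_ge0 x y)). intro M.
  eapply Rle_trans; [apply zpart_le, (H1_weight_le_resonant x y kz) |].
  rewrite zpart_plus, zpart_scal, zpart_indicator.
  pose proof (zpart_le_zsum _ (kin_weight_ge0 x y kz) M (kin_weight_summable x y kz Hx Hy)).
  assert ((3 + 2 * IZR kz ^ 2) * zpart (kin_weight x y kz) M <= (3 + 2 * IZR kz ^ 2) * H)
    by (apply Rmult_le_compat_l; lra).
  assert (0 <= (1 + IZR kz ^ 2) * cabs2 x y (- kz)) by (apply Rmult_le_pos; lra).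
  destruct (Z_le_dec _ _); lra.
Qed.

(** * Convergence of directions *)

Lemma bounded_seq_cv_subseq (u : nat -> R) : (forall n, -1 <= u n <= 1) ->
  exists (phi : nat -> nat) l, (forall n, (phi n < phi (S n))%nat) /\ Un_cv (fun n => u (phi n)) l.
Proof.
  intro Hb.
  destruct (Bolzano_Weierstrass u (fun c => -1 <= c <= 1) (compact_P3 (-1) 1) Hb) as [l Hl].
  assert (Hch : forall N m : nat, exists p, (N <= p)%nat /\ Rabs (u p - l) < / (INR m + 1)).
  { intros N m.
    assert (Hpos : 0 < / (INR m + 1)) by (apply Rinv_0_lt_compat; pose proof (pos_INR m); lra).
    destruct (Hl (fun c => Rabs (c - l) < / (INR m + 1)) N) as [p [Hp1 Hp2]].
    - exists (mkposreal _ Hpos). intros c Hc. exact Hc.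
    - exists p; auto. }
  set (next := fun N m => epsilon (inhabits 0%nat)
                            (fun p => (N <= p)%nat /\ Rabs (u p - l) < / (INR m + 1))).
  assert (Hnext : forall N m, (N <= next N m)%nat /\ Rabs (u (next N m) - l) < / (INR m + 1))
    by (intros N m; apply epsilon_spec, Hch).
  set (phi := fix phi n := match n with O => next O O | S n' => next (S (phi n')) (S n') end).
  exists phi, l. split.
  - intro n. simpl. destruct (Hnext (S (phi n)) (S n)). lia.
  - intros eps He. destruct (INR_archimed eps 1 He) as [N0 HN0]. exists N0. intros n Hn.
    assert (Hn' : Rabs (u (phi n) - l) < / (INR n + 1))
      by (destruct n; simpl; [apply (Hnext O O) | apply (Hnext _ (S n))]).
    unfold R_dist. eapply Rlt_le_trans; [exact Hn' |].
    apply le_INR in Hn. pose proof (pos_INR n).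
    apply Rmult_le_reg_l with (INR n + 1); [lra |]. rewrite Rinv_r by lra. nra.
Qed.

Lemma strict_mono_ge (phi : nat -> nat) : (forall n, (phi n < phi (S n))%nat) ->
  forall n, (n <= phi n)%nat.
Proof. intros H n. induction n as [|n IH]; [lia | specialize (H n); lia]. Qed.

Lemma bounded_seq2_cv_subseq (a b : nat -> R) :
  (forall n, -1 <= a n <= 1) -> (forall n, -1 <= b n <= 1) ->
  exists (phi : nat -> nat) l1 l2, (forall n, (phi n < phi (S n))%nat) /\
     Un_cv (fun n => a (phi n)) l1 /\ Un_cv (fun n => b (phi n)) l2.
Proof.
  intros Ha Hb. destruct (bounded_seq_cv_subseq a Ha) as [p1 [l1 [Hp1 Hc1]]].
  destruct (bounded_seq_cv_subseq (fun n => b (p1 n)) (fun n => Hb (p1 n))) as [p2 [l2 [Hp2 Hc2]]].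
  exists (fun n => p1 (p2 n)), l1, l2. split; [| split; [| exact Hc2]].
  - intro n. assert (Hmono : forall m m', (m < m')%nat -> (p1 m < p1 m')%nat).
    { intros m m' H. induction H; [apply Hp1 | specialize (Hp1 m0); lia]. }
    apply Hmono, Hp2.
  - intros eps He. destruct (Hc1 eps He) as [N HN]. exists N. intros n Hn.
    apply HN. pose proof (strict_mono_ge p2 Hp2 n). lia.
Qed.

Lemma Rdiv_bound p r : Rabs p <= r -> -1 <= p / r <= 1.
Proof.
  intro H. pose proof (Rabs_pos p).
  destruct (Req_dec r 0) as [->|Hr].
  - unfold Rdiv. rewrite Rinv_0, Rmult_0_r. lra.
  - apply Rabs_le_between. unfold Rdiv.
    rewrite Rabs_mult, (Rabs_right (/ _)) by (apply Rle_ge, Rlt_le, Rinv_0_lt_compat; lra).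
    apply Rmult_le_reg_r with r; [lra |]. rewrite Rmult_assoc, Rinv_l; lra.
Qed.

Section Directions.
Variable w B0 : R.
Variables x y : nat -> R -> R.
Variables P Q : nat -> R.
Hypothesis near_mode : forall n t,
  cnorm (x n t - mode_x (P n) (Q n) w t) (y n t - mode_y (P n) (Q n) w t) <= B0.
Hypothesis amplitude_unbounded : forall B, exists n0, forall n, (n0 <= n)%nat -> cnorm (P n) (Q n) > B.

Lemma modulus_near_amplitude n t : Rabs (cnorm (x n t) (y n t) - cnorm (P n) (Q n)) <= B0.
Proof.
  rewrite <- (cnorm_mode (P n) (Q n) w t).
  eapply Rle_trans; [apply cnorm_rev_triangle | apply near_mode].
Qed.

Lemma modulus_unbounded B : exists n0, forall n t, (n0 <= n)%nat -> cnorm (x n t) (y n t) > B.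
Proof.
  destruct (amplitude_unbounded (B + B0)) as [n0 Hn0]. exists n0. intros n t Hn.
  pose proof (modulus_near_amplitude n t) as H. apply Rabs_le_between in H.
  specialize (Hn0 n Hn). lra.
Qed.

Let a n := P n / cnorm (P n) (Q n).
Let b n := Q n / cnorm (P n) (Q n).

Lemma direction_unit n : 0 < cnorm (P n) (Q n) -> cnorm (a n) (b n) = 1.
Proof.
  intro Hr. unfold a, b, Rdiv. rewrite (Rmult_comm (P n)), (Rmult_comm (Q n)), cnorm_scal.
  rewrite Rabs_right by (apply Rle_ge, Rlt_le, Rinv_0_lt_compat; exact Hr). field. lra.
Qed.

Lemma direction_close n t u1 u2 eps : eps > 0 ->
  cnorm (P n) (Q n) > 6 * B0 / eps -> Rabs (a n - u1) < eps / 3 -> Rabs (b n - u2) < eps / 3 ->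
  cnorm (x n t / cnorm (x n t) (y n t) - mode_x u1 u2 w t)
        (y n t / cnorm (x n t) (y n t) - mode_y u1 u2 w t) < eps.
Proof.
  intros He Hamp Ha Hb.
  set (rh := cnorm (P n) (Q n)) in *.
  assert (HB0 : 0 <= B0) by (eapply Rle_trans; [apply cnorm_ge0 | apply (near_mode n t)]).
  assert (Hrh : 0 < rh) by (assert (0 <= 6 * B0 / eps) by (apply Rdiv_le_0_compat; lra); lra).
  set (m1 := mode_x (P n) (Q n) w t). set (m2 := mode_y (P n) (Q n) w t).
  assert (Hm : cnorm m1 m2 = rh) by apply cnorm_mode.
  (* [zeta / |zeta|] is within [2 B0 / rh] of [m / |m|], and [m / |m| = e^(-iwt) (a + i b)] *)
  pose proof (cnorm_direction_sub (x n t) (y n t) m1 m2 ltac:(lra)) as Hdir.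
  rewrite Hm in Hdir.
  assert (Hsmall : 2 * cnorm (x n t - m1) (y n t - m2) / rh < eps / 3).
  { apply Rmult_lt_reg_r with rh; [exact Hrh |]. unfold Rdiv at 1.
    rewrite Rmult_assoc, Rinv_l, Rmult_1_r by lra.
    apply (Rmult_lt_compat_r eps) in Hamp; [| lra].
    unfold Rdiv in Hamp. rewrite Rmult_assoc, Rinv_l in Hamp by lra.
    pose proof (near_mode n t). fold m1 m2 in H. nra. }
  set (X := x n t / cnorm (x n t) (y n t)) in *. set (Y := y n t / cnorm (x n t) (y n t)) in *.
  replace (X - mode_x u1 u2 w t) with ((X - m1 / rh) + mode_x (a n - u1) (b n - u2) w t)
    by (unfold m1, mode_x, a, b; fold rh; field; lra).
  replace (Y - mode_y u1 u2 w t) with ((Y - m2 / rh) + mode_y (a n - u1) (b n - u2) w t)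
    by (unfold m2, mode_y, a, b; fold rh; field; lra).
  eapply Rle_lt_trans; [apply cnorm_triangle |].
  rewrite cnorm_mode. pose proof (cnorm_le_abs (a n - u1) (b n - u2)). lra.
Qed.

Lemma direction_converges : exists (phi : nat -> nat) (u1 u2 : R),
  (forall n, (phi n < phi (S n))%nat) /\ cnorm u1 u2 = 1 /\
  forall eps, eps > 0 -> exists n0, forall n t, (n0 <= n)%nat ->
    cnorm (x (phi n) t / cnorm (x (phi n) t) (y (phi n) t) - mode_x u1 u2 w t)
          (y (phi n) t / cnorm (x (phi n) t) (y (phi n) t) - mode_y u1 u2 w t) < eps.
Proof.
  destruct (bounded_seq2_cv_subseq a b (fun n => Rdiv_bound _ _ (Rabs_le_cnorm_l _ _))
                                (fun n => Rdiv_bound _ _ (Rabs_le_cnorm_r _ _)))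
    as [phi [u1 [u2 [Hphi [Ca Cb]]]]].
  pose proof (strict_mono_ge phi Hphi) as Hge.
  exists phi, u1, u2. split; [exact Hphi | split].
  - assert (Hclose : forall eps, eps > 0 -> Rabs (cnorm u1 u2 - 1) < eps).
    { intros eps He.
      destruct (Ca (eps / 2)) as [n1 Hn1]; [lra |]. destruct (Cb (eps / 2)) as [n2 Hn2]; [lra |].
      destruct (amplitude_unbounded 0) as [n3 Hn3].
      set (m := Nat.max n1 (Nat.max n2 n3)).
      specialize (Hn1 m ltac:(lia)). specialize (Hn2 m ltac:(lia)).
      specialize (Hn3 (phi m) ltac:(specialize (Hge m); lia)).
      unfold R_dist in Hn1, Hn2. rewrite <- (direction_unit (phi m)) by lra.
      rewrite Rabs_minus_sym.
      eapply Rle_lt_trans; [apply cnorm_rev_triangle |].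
      eapply Rle_lt_trans; [apply cnorm_le_abs | lra]. }
    destruct (Req_dec (cnorm u1 u2) 1) as [|Hne]; [assumption | exfalso].
    specialize (Hclose _ (Rabs_pos_lt _ (Rminus_eq_contra _ _ Hne))). lra.
  - intros eps He.
    destruct (Ca (eps / 3)) as [n1 Hn1]; [lra |]. destruct (Cb (eps / 3)) as [n2 Hn2]; [lra |].
    destruct (amplitude_unbounded (6 * B0 / eps)) as [n3 Hn3].
    exists (Nat.max n1 (Nat.max n2 n3)). intros n t Hn.
    apply direction_close;
      [exact He | apply Hn3; specialize (Hge n); lia | apply Hn1; lia | apply Hn2; lia].
Qed.

End Directions.

(** * Sequences of choreographies with bounded action *)

Section BoundedAction.
Variables (N : nat) (kz : Z) (q : nat -> loop) (C : R).
Hypotheses (HN : (0 < N)%nat) (Hkz : kz <> 0%Z).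
Hypothesis Hlam : forall n, in_Lambda N (q n).
Hypothesis Hchor : forall n, simple_choreographic N (q n).
Hypothesis Hmean : forall n, mean (lz (q n) 0) = 0.
Hypothesis Hact : forall n, action_trunc (IZR kz) N (q n) 0 <= C.

Let H := C / PI.
Let B0 := 5 + (3 + 2 * IZR kz ^ 2) * H.
Let phase i := 2 * PI * INR i / INR N.
Let P n i := coeff_re (lx (q n) i) (ly (q n) i) (- kz).
Let Q n i := coeff_im (lx (q n) i) (ly (q n) i) (- kz).
Let amp n i := cnorm (P n i) (Q n i).

Lemma kin_bounds n i : (i < N)%nat ->
  zsum (kin_weight (lx (q n) i) (ly (q n) i) kz) <= H /\ zsum (kin_weight (lz (q n) i) zero_fun 0) <= H.
Proof. apply action_trunc_bounds; [apply Hlam | apply Hact]. Qed.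

Lemma near_resonant_mode n i t : (i < N)%nat ->
  cnorm (lx (q n) i t - mode_x (P n i) (Q n i) (IZR kz) t)
        (ly (q n) i t - mode_y (P n i) (Q n i) (IZR kz) t) <= B0.
Proof.
  intro Hi. destruct (Hlam n i Hi) as ((Cx & Px & _) & (Cy & Py & _) & _).
  apply resonant_mode_approx; auto using cont_of_continuity.
  intro M. eapply Rle_trans; [| apply (proj1 (kin_bounds n i Hi))].
  apply zpart_le_zsum; [apply kin_weight_ge0 | apply kin_weight_summable; apply Hlam; exact Hi].
Qed.

Lemma z_H1_bounded n i : (i < N)%nat -> H1sq (lz (q n) i) zero_fun <= 2 * PI * (2 * H).
Proof.
  intro Hi. apply H1sq_le_kin; [apply Hlam; exact Hi | | apply (kin_bounds n i Hi)].
  destruct (Hlam n 0%nat HN) as (_ & _ & (C0 & P0 & _)).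
  apply (fc_0_translate _ (lz (q n) 0) (phase i));
    [apply cont_of_continuity; exact C0 | exact P0 | apply Hmean |].
  intro t. apply (Hchor n i t Hi).
Qed.

Lemma amp_le_amp0 n i : (i < N)%nat -> amp n i <= amp n 0 + 2 * B0.
Proof.
  intro Hi.
  pose proof (modulus_near_amplitude _ _ _ _ _ _ (fun n t => near_resonant_mode n i t Hi) n 0) as Hi0.
  pose proof (modulus_near_amplitude _ _ _ _ _ _ (fun n t => near_resonant_mode n 0 t HN) n (phase i))
    as H0.
  destruct (Hchor n i 0 Hi) as (E1 & E2 & _). rewrite Rplus_0_l in E1, E2.
  cbv beta in Hi0, H0. unfold phase in H0. rewrite E1, E2 in Hi0.
  apply Rabs_le_between in Hi0. apply Rabs_le_between in H0. unfold amp. lra.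
Qed.

Let loop_H1_bound s :=
  INR N * (2 * PI * ((1 + IZR kz ^ 2) * (s + 2 * B0) ^ 2 + (3 + 2 * IZR kz ^ 2) * H)
                    + 2 * PI * (2 * H)).

Lemma H1norm_loop_le n : H1norm_loop N (q n) <= sqrt (loop_H1_bound (amp n 0)).
Proof.
  apply sqrt_le_1_alt, rsum_le_const. intros i Hi.
  destruct (Hlam n i Hi) as (Xi & Yi & _). destruct (kin_bounds n i Hi) as [Hk _].
  pose proof (H1sq_le_resonant _ _ kz H Xi Yi Hk) as Hxy. fold (P n i) (Q n i) (amp n i) in Hxy.
  pose proof (z_H1_bounded n i Hi).
  assert (amp n i ^ 2 <= (amp n 0 + 2 * B0) ^ 2)
    by (pose proof (amp_le_amp0 n i Hi); pose proof (cnorm_ge0 (P n i) (Q n i));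
        fold (amp n i) in *; nra).
  pose proof PI_RGT_0. pose proof (pow2_ge_0 (IZR kz)).
  assert ((1 + IZR kz ^ 2) * amp n i ^ 2 <= (1 + IZR kz ^ 2) * (amp n 0 + 2 * B0) ^ 2)
    by (apply Rmult_le_compat_l; lra).
  nra.
Qed.

Lemma loop_H1_bound_mono s s' : 0 <= s <= s' -> 0 <= B0 -> loop_H1_bound s <= loop_H1_bound s'.
Proof.
  intros Hs HB0. unfold loop_H1_bound. apply Rmult_le_compat_l; [apply pos_INR |].
  pose proof PI_RGT_0. pose proof (pow2_ge_0 (IZR kz)).
  assert ((s + 2 * B0) ^ 2 <= (s' + 2 * B0) ^ 2) by nra.
  assert ((1 + IZR kz ^ 2) * (s + 2 * B0) ^ 2 <= (1 + IZR kz ^ 2) * (s' + 2 * B0) ^ 2)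
    by (apply Rmult_le_compat_l; lra).
  nra.
Qed.

Hypothesis Hnorm : forall B, exists n0, forall n, (n0 <= n)%nat -> H1norm_loop N (q n) > B.

Lemma amp_unbounded B : exists n0, forall n, (n0 <= n)%nat -> amp n 0 > B.
Proof.
  assert (HB0 : 0 <= B0).
  { eapply Rle_trans; [apply cnorm_ge0 | apply (near_resonant_mode 0 0 0 HN)]. }
  destruct (Hnorm (sqrt (loop_H1_bound (Rmax B 0)))) as [n0 Hn0]. exists n0. intros n Hn.
  specialize (Hn0 n Hn). pose proof (H1norm_loop_le n).
  apply Rnot_le_lt. intro Hle.
  assert (sqrt (loop_H1_bound (amp n 0)) <= sqrt (loop_H1_bound (Rmax B 0))).
  { apply sqrt_le_1_alt, loop_H1_bound_mono; [| exact HB0]. split; [apply cnorm_ge0 |].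
    eapply Rle_trans; [exact Hle | apply Rmax_l]. }
  lra.
Qed.

Lemma zeta_modulus_unbounded i : (i < N)%nat -> forall B, exists n0, forall n t, (n0 <= n)%nat ->
  cnorm (lx (q n) i t) (ly (q n) i t) > B.
Proof.
  intros Hi B.
  destruct (modulus_unbounded _ _ _ _ _ _ (fun n t => near_resonant_mode n 0 t HN) amp_unbounded B)
    as [n0 Hn0].
  exists n0. intros n t Hn. destruct (Hchor n i t Hi) as (-> & -> & _). apply Hn0, Hn.
Qed.

Lemma zeta_direction_converges : exists (phi : nat -> nat) (u1 u2 : nat -> R),
  (forall n, (phi n < phi (S n))%nat) /\
  (forall i, (i < N)%nat -> cnorm (u1 i) (u2 i) = 1) /\
  (forall i, (i < N)%nat -> forall eps, eps > 0 -> exists n0, forall n t, (n0 <= n)%nat ->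
     let x := lx (q (phi n)) i t in
     let y := ly (q (phi n)) i t in
     let r := cnorm x y in
     let c := cos (IZR kz * t) in
     let s := sin (IZR kz * t) in
     cnorm (x / r - (c * u1 i + s * u2 i)) (y / r - (c * u2 i - s * u1 i)) < eps).
Proof.
  destruct (direction_converges _ _ _ _ _ _ (fun n t => near_resonant_mode n 0 t HN) amp_unbounded)
    as (phi & u1 & u2 & Hphi & Hu & Hcv).
  (* [zeta_i(t) = zeta_0(t + phase i)], so [u_i = e^(-i kz phase i) u] *)
  exists phi, (fun i => mode_x u1 u2 (IZR kz) (phase i)), (fun i => mode_y u1 u2 (IZR kz) (phase i)).
  split; [exact Hphi | split; [intros; rewrite cnorm_mode; exact Hu |]].
  intros i Hi eps He. destruct (Hcv eps He) as [n0 Hn0]. exists n0. intros n t Hn. cbv zeta.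
  destruct (Hchor (phi n) i t Hi) as (-> & -> & _).
  specialize (Hn0 n (t + phase i) Hn).
  rewrite mode_x_translate, mode_y_translate in Hn0.
  set (U1 := mode_x u1 u2 (IZR kz) (phase i)) in *. set (U2 := mode_y u1 u2 (IZR kz) (phase i)) in *.
  replace (cos (IZR kz * t) * U1 + sin (IZR kz * t) * U2) with (mode_x U1 U2 (IZR kz) t)
    by (unfold mode_x; ring).
  replace (cos (IZR kz * t) * U2 - sin (IZR kz * t) * U1) with (mode_y U1 U2 (IZR kz) t)
    by (unfold mode_y; ring).
  exact Hn0.
Qed.

End BoundedAction.

Theorem lemma5p2 (N : nat) (HN : (2 <= N)%nat) (k : nat) (Hk1 : (1 <= k)%nat)
  (Hk2 : (k <= N - 1)%nat) (q : nat -> loop)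
  (Hlam : forall n, in_Lambda N (q n))
  (Hchor : forall n, simple_choreographic N (q n))
  (Hmean : forall n, mean (lz (q n) 0) = 0)
  (Hnorm : forall B, exists n0, forall n, (n0 <= n)%nat -> H1norm_loop N (q n) > B)
  (Hact : exists C, forall n M, action_trunc (INR k) N (q n) M <= C) :
  (* (a) *)
  (exists B, forall n i, (i < N)%nat -> H1norm_real (lz (q n) i) <= B) /\
  (* (b) *)
  (forall i, (i < N)%nat -> forall B, exists n0, forall n t, (n0 <= n)%nat ->
      cnorm (lx (q n) i t) (ly (q n) i t) > B) /\
  (* (c) *)
  (exists (phi : nat -> nat) (u1 u2 : nat -> R),
      (forall n, (phi n < phi (S n))%nat) /\
      (forall i, (i < N)%nat -> cnorm (u1 i) (u2 i) = 1) /\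
      (forall i, (i < N)%nat -> forall eps, eps > 0 -> exists n0, forall n t, (n0 <= n)%nat ->
         let x := lx (q (phi n)) i t in
         let y := ly (q (phi n)) i t in
         let r := cnorm x y in
         let c := cos (INR k * t) in
         let s := sin (INR k * t) in
         cnorm (x / r - (c * u1 i + s * u2 i)) (y / r - (c * u2 i - s * u1 i)) < eps)).
Proof.
  destruct Hact as [C HC].
  (* only [N > 0] and [k > 0] are used *)
  assert (HN0 : (0 < N)%nat) by lia.
  assert (Hkz : Z.of_nat k <> 0%Z) by lia.
  rewrite INR_IZR_INZ in HC |- *.
  assert (HC0 : forall n, action_trunc (IZR (Z.of_nat k)) N (q n) 0 <= C) by (intro; apply HC).
  split; [| split].
  - exists (sqrt (2 * PI * (2 * (C / PI)))). intros n i Hi.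
    apply sqrt_le_1_alt, (z_H1_bounded N (Z.of_nat k) q C); assumption.
  - apply (zeta_modulus_unbounded N (Z.of_nat k) q C); assumption.
  - apply (zeta_direction_converges N (Z.of_nat k) q C); assumption.
Qed.
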